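(* Let $u_0\in L^1(\mathbb R)\cap BV(\mathbb R)$ and assume the CFL condition. For $n\ge0$ and $i\in\mathbb Z$ define $$W_i^n=\hat f(U_i^n,U_{i+1}^n)-D_+A(U_i^n)-b\sum_{l=-\infty}^{i}\sum_{j\in\mathbb Z}G^l_jU_j^n.$$ Then for all $n\ge0$, $$\sup_{i\in\mathbb Z}|W_i^n|\le\sup_{i\in\mathbb Z}|W_i^0|\qquad\text{and}\qquad\sum_{i\in\mathbb Z}|W^n_{i+1}-W^n_i|\le\sum_{i\in\mathbb Z}|W^0_{i+1}-W^0_i|.$$
   Context: Let $f,a:\mathbb R\to\mathbb R$ be Lipschitz, $a\ge0$ bounded, $f(0)=0$, $A(u)=\int_0^ua(s)ds$, $b\ge0$, $\lambda\in(0,1)$, $c_\lambda>0$, $\mathcal L[u](x)=c_\lambda\int_{|z|>0}\frac{u(x+z)-u(x)}{|z|^{1+\lambda}}dz$. Let $\hat f:\mathbb R^2\to\mathbb R$ be $C^1$ and Lipschitz, consistent ($\hat f(u,u)=f(u)$), nondecreasing in its first and nonincreasing in its second argument. Grid: $x_i=i\Delta x$, $I_i=[x_i,x_{i+1})$, $t_n=n\Delta t$. Weights $G^i_j=\int_{I_i}\mathcal L[\mathbf 1_{I_j}](x)dx$; these satisfy $G^i_j\ge0$ for $i\ne j$, $\sum_j|G^i_j|<\infty$, $\sum_iG^i_j=\sum_jG^i_j=0$, $G^i_j=G^j_i$, $G^{i+1}_{j+1}=G^i_j$, and $G^i_i=-d_\lambda\Delta x^{1-\lambda}$ with $d_\lambda=c_\lambda\big(\int_{|z|<1}|z|^{-\lambda}dz+\int_{|z|>1}|z|^{-1-\lambda}dz\big)$.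 $D_\pm U_i=\pm(U_{i\pm1}-U_i)/\Delta x$, $\mathcal L\langle U\rangle_i=\frac1{\Delta x}\sum_jG^i_jU_j$. Scheme: $U_i^{n+1}=U_i^n-\Delta t\,D_-\big[\hat f(U_i^n,U_{i+1}^n)-D_+A(U_i^n)\big]+\Delta t\,b\,\mathcal L\langle U^n\rangle_i$, $U^0_i=\frac1{\Delta x}\int_{I_i}u_0$. CFL condition: $\frac{\Delta t}{\Delta x}(\|\partial_{1}\hat f\|_\infty+\|\partial_{2}\hat f\|_\infty)+\frac{2\Delta t}{\Delta x^2}\|a\|_\infty+b\,d_\lambda\frac{\Delta t}{\Delta x^\lambda}\le1$. *)

From Stdlib Require Import Reals ZArith Classical ClassicalEpsilon.
Open Scope R_scope.

(* Value of the Riemann integral of f over [a,b] (junk 0-free choice if not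
   integrable; all uses below are on integrable functions). *)
Definition Rint (f : R -> R) (a b : R) : R :=
  epsilon (inhabits 0) (fun I => exists pr : Riemann_integrable f a b, RiemannInt pr = I).

(* Limit of a real sequence (chosen; meaningful when the sequence converges). *)
Definition seq_lim (u : nat -> R) : R := epsilon (inhabits 0) (fun l => Un_cv u l).

(* Partial sums over the integers: indices -(N+1) .. N. *)
Definition zpart (f : Z -> R) (N : nat) : R :=
  sum_f_R0 (fun k => f (Z.of_nat k) + f (- Z.of_nat (S k))%Z) N.

Definition Zsum (f : Z -> R) : R := seq_lim (zpart f).

Definition Zsum_upto (g : Z -> R) (i : Z) : R :=
  seq_lim (fun N => sum_f_R0 (fun k => g (i - Z.of_nat k)%Z) N).

Definition Lipschitz (g : R -> R) : Prop :=
  exists L, forall x y, Rabs (g x - g y) <= L * Rabs (x - y).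

Definition Lipschitz2 (g : R -> R -> R) : Prop :=
  exists L, forall u v u' v', Rabs (g u v - g u' v') <= L * (Rabs (u - u') + Rabs (v - v')).

Definition continuous2 (g : R -> R -> R) : Prop :=
  forall u v eps, 0 < eps -> exists delta, 0 < delta /\
    forall u' v', Rabs (u' - u) < delta -> Rabs (v' - v) < delta ->
      Rabs (g u' v' - g u v) < eps.

Definition C1_with_partials (g d1 d2 : R -> R -> R) : Prop :=
  (forall u v, derivable_pt_lim (fun s => g s v) u (d1 u v)) /\
  (forall u v, derivable_pt_lim (fun s => g u s) v (d2 u v)) /\
  continuous2 d1 /\ continuous2 d2.

Definition bounded_variation (u : R -> R) : Prop :=
  exists V, forall x : nat -> R, (forall k, x k <= x (S k)) ->
    forall m, sum_f_R0 (fun k => Rabs (u (x (S k)) - u (x k))) m <= V.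

(* u in L^1(R) (as an improper Riemann integral, u locally Riemann integrable) *)
Definition integrable_L1 (u : R -> R) : Prop :=
  (forall a b, inhabited (Riemann_integrable u a b)) /\
  exists C, forall N : nat, Rint (fun x => Rabs (u x)) (- INR N) (INR N) <= C.

Definition is_sup_abs2 (g : R -> R -> R) (M : R) : Prop :=
  is_lub (fun y => exists u v, y = Rabs (g u v)) M.
Definition is_sup_abs (g : R -> R) (M : R) : Prop :=
  is_lub (fun y => exists u, y = Rabs (g u)) M.

(* x^y for x >= 0, y > 0 (with 0^y = 0) *)
Definition pw (x y : R) : R := if Rle_dec x 0 then 0 else Rpower x y.

Definition Aint (a : R -> R) (u : R) : R := Rint a 0 u.

(* d_lambda = c_lambda (int_{|z|<1} |z|^{-lambda} + int_{|z|>1} |z|^{-1-lambda}) *)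
Definition dlam (lam c : R) : R := c * (2 / (1 - lam) + 2 / lam).

(* G^i_j = int_{I_i} L[1_{I_j}](x) dx, evaluated in closed form:
   Dx^{1-lam} c/(lam(1-lam)) (2|k|^{1-lam} - |k+1|^{1-lam} - |k-1|^{1-lam}), k=j-i. *)
Definition Gw (lam c dx : R) (i j : Z) : R :=
  let k := IZR (j - i) in
  Rpower dx (1 - lam) * (c / (lam * (1 - lam))) *
  (2 * pw (Rabs k) (1 - lam) - pw (Rabs (k + 1)) (1 - lam) - pw (Rabs (k - 1)) (1 - lam)).

Definition numflux (fh : R -> R -> R) (a : R -> R) (dx : R) (V : Z -> R) (i : Z) : R :=
  fh (V i) (V (i + 1)%Z) - (Aint a (V (i + 1)%Z) - Aint a (V i)) / dx.

Definition Ldisc (lam c dx : R) (V : Z -> R) (i : Z) : R :=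
  / dx * Zsum (fun j => Gw lam c dx i j * V j).

Fixpoint U (fh : R -> R -> R) (a : R -> R) (b lam c dx dt : R) (u0 : R -> R)
  (n : nat) : Z -> R :=
  match n with
  | O => fun i => / dx * Rint u0 (IZR i * dx) (IZR (i + 1) * dx)
  | S m => let V := U fh a b lam c dx dt u0 m in
      fun i => V i - dt * ((numflux fh a dx V i - numflux fh a dx V (i - 1)%Z) / dx)
               + dt * b * Ldisc lam c dx V i
  end.

Definition W (fh : R -> R -> R) (a : R -> R) (b lam c dx dt : R) (u0 : R -> R)
  (n : nat) (i : Z) : R :=
  let V := U fh a b lam c dx dt u0 n in
  numflux fh a dx V i
  - b * Zsum_upto (fun l => Zsum (fun j => Gw lam c dx l j * V j)) i.

(* The scheme is conservative, [U^{n+1}_i = U^n_i - dt/dx (W^n_i - W^n_{i-1})]: the fractional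
   term [b sum_j G^i_j U_j] is the backward difference in [i] of the partial sums
   [sum_{l <= i}] entering [W].  Writing the increments of [fhat] and [A] as slopes (mean-value
   theorem), one gets
     [W^{n+1}_i = W_i + C_i (W_{i+1} - W_i) - D_i (W_i - W_{i-1}) + (b dt/dx) sum_j G^i_j W_j]
   with [C_i, D_i >= 0] by the monotonicity of [fhat] and [A].  The weights [G^i_j], [j <> i],
   are nonnegative (concavity of [t^(1-lam)]) and their row and column sums are at most
   [- G^i_i = d_lam dx^(1-lam)].  Under the CFL condition [W^{n+1}_i] is therefore a combination
   of the [W^n_j] with nonnegative weights summing to at most 1, which gives the sup bound, and
   the increments [W_{i+1} - W_i] evolve by a nonnegative matrix whose columns sum to at most 1,
   which gives the bound on the total variation. *)

From Stdlib Require Import Reals ZArith Lra Lia ClassicalEpsilon FunctionalExtensionality.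
Open Scope R_scope.

(** * Absolutely summable sequences indexed by [Z] *)

Lemma zpart_0 f : zpart f 0 = f 0%Z + f (-1)%Z.
Proof. reflexivity. Qed.

Lemma zpart_S f N :
  zpart f (S N) = zpart f N + (f (Z.of_nat (S N)) + f (- Z.of_nat (S (S N)))%Z).
Proof. reflexivity. Qed.

Lemma zpart_ext f g N : (forall k, f k = g k) -> zpart f N = zpart g N.
Proof. intros H; unfold zpart; apply sum_eq; intros; rewrite !H; reflexivity. Qed.

Lemma zpart_le f g N : (forall k, f k <= g k) -> zpart f N <= zpart g N.
Proof. intros H; unfold zpart; apply sum_Rle; intros; apply Rplus_le_compat; apply H. Qed.

Lemma zpart_nonneg f N : (forall k, 0 <= f k) -> 0 <= zpart f N.
Proof.
  intros H; unfold zpart; apply cond_pos_sum; intros n.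
  pose proof (H (Z.of_nat n)); pose proof (H (- Z.of_nat (S n))%Z); lra.
Qed.

Lemma zpart_plus f g N : zpart (fun k => f k + g k) N = zpart f N + zpart g N.
Proof. induction N; [rewrite !zpart_0 | rewrite !zpart_S, IHN]; ring. Qed.

Lemma zpart_scal c f N : zpart (fun k => c * f k) N = c * zpart f N.
Proof. induction N; [rewrite !zpart_0 | rewrite !zpart_S, IHN]; ring. Qed.

Lemma zpart_incr f N M : (forall k, 0 <= f k) -> (N <= M)%nat -> zpart f N <= zpart f M.
Proof.
  intros H HNM; induction HNM; [lra|]. rewrite zpart_S.
  pose proof (H (Z.of_nat (S m))); pose proof (H (- Z.of_nat (S (S m)))%Z); lra.
Qed.

Lemma zpart_abs f N : Rabs (zpart f N) <= zpart (fun k => Rabs (f k)) N.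
Proof.
  induction N; [rewrite !zpart_0; apply Rabs_triang|].
  rewrite !zpart_S. eapply Rle_trans; [apply Rabs_triang|].
  pose proof (Rabs_triang (f (Z.of_nat (S N))) (f (- Z.of_nat (S (S N)))%Z)). lra.
Qed.

Definition in_window (K : nat) (d : Z) : bool :=
  (Z.leb (- (Z.of_nat K + 1)) d && Z.leb d (Z.of_nat K))%bool.

Lemma in_window_spec K d : in_window K d = true <-> (- (Z.of_nat K + 1) <= d <= Z.of_nat K)%Z.
Proof. unfold in_window; rewrite Bool.andb_true_iff, !Z.leb_le; tauto. Qed.

Lemma in_window_large K d : (Z.abs_nat d <= K)%nat -> in_window K d = true.
Proof. intros H; apply in_window_spec; lia. Qed.

Lemma in_window_outside K d : (d < - (Z.of_nat K + 1) \/ Z.of_nat K < d)%Z -> in_window K d = false.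
Proof. intros H; apply Bool.not_true_iff_false; rewrite in_window_spec; lia. Qed.

Lemma zpart_indicator k x N :
  zpart (fun d => if Z.eq_dec d k then x else 0) N = if in_window N k then x else 0.
Proof.
  induction N as [|N IHN]; [rewrite zpart_0 | rewrite zpart_S, IHN].
  - destruct (Z.eq_dec 0 k), (Z.eq_dec (-1) k), (in_window 0 k) eqn:E;
      try rewrite in_window_spec in E; try rewrite <- Bool.not_true_iff_false, in_window_spec in E;
      simpl in *; try lia; lra.
  - destruct (Z.eq_dec (Z.of_nat (S N)) k), (Z.eq_dec (- Z.of_nat (S (S N))) k),
      (in_window N k) eqn:E, (in_window (S N) k) eqn:E2;
      try rewrite in_window_spec in E; try rewrite <- Bool.not_true_iff_false, in_window_spec in E;
      try rewrite in_window_spec in E2; try rewrite <- Bool.not_true_iff_false, in_window_spec in E2;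
      try lia; lra.
Qed.

Lemma zpart_eventually_const f K :
  (forall d, in_window K d = false -> f d = 0) -> forall N, (K <= N)%nat -> zpart f N = zpart f K.
Proof.
  intros H N HN; induction HN as [|m HKm IH]; auto. rewrite zpart_S, IH.
  rewrite (H (Z.of_nat (S m))), (H (- Z.of_nat (S (S m)))%Z) by (apply in_window_outside; lia).
  ring.
Qed.

Lemma zpart_ext_window f g N :
  (forall d, in_window N d = true -> f d = g d) -> zpart f N = zpart g N.
Proof. intros H; unfold zpart; apply sum_eq; intros; rewrite !H; auto; apply in_window_spec; lia. Qed.

Lemma zpart_shift_succ f N :
  zpart (fun k => f (k + 1)%Z) N = zpart f N - f (- Z.of_nat (S N))%Z + f (Z.of_nat (S N)).
Proof.
  induction N as [|N IHN].
  - rewrite !zpart_0; simpl; ring.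
  - rewrite !zpart_S, IHN.
    replace (Z.of_nat (S N) + 1)%Z with (Z.of_nat (S (S N))) by lia.
    replace (- Z.of_nat (S (S N)) + 1)%Z with (- Z.of_nat (S N))%Z by lia. ring.
Qed.

Lemma zpart_shift_pred f N :
  zpart (fun k => f (k - 1)%Z) N = zpart f N - f (Z.of_nat N) + f (- Z.of_nat (S (S N)))%Z.
Proof.
  induction N as [|N IHN].
  - rewrite !zpart_0; simpl; ring.
  - rewrite !zpart_S, IHN.
    replace (Z.of_nat (S N) - 1)%Z with (Z.of_nat N) by lia.
    replace (- Z.of_nat (S (S N)) - 1)%Z with (- Z.of_nat (S (S (S N))))%Z by lia. ring.
Qed.

Lemma seq_lim_spec u l : Un_cv u l -> seq_lim u = l.
Proof.
  intros H; unfold seq_lim.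
  apply (UL_sequence u); [|exact H].
  exact (epsilon_spec (inhabits 0) (fun l => Un_cv u l) (ex_intro _ l H)).
Qed.

Lemma Un_cv_const x : Un_cv (fun _ => x) x.
Proof. intros e He; exists 0%nat; intros; unfold Rdist; rewrite Rminus_diag, Rabs_R0; lra. Qed.

Lemma Un_cv_eventually_const (u : nat -> R) x N0 : (forall N, (N0 <= N)%nat -> u N = x) -> Un_cv u x.
Proof.
  intros H e He; exists N0; intros n Hn; rewrite H by lia.
  unfold Rdist; rewrite Rminus_diag, Rabs_R0; lra.
Qed.

Lemma Un_cv_S u l : Un_cv u l -> Un_cv (fun n => u (S n)) l.
Proof. intros H e He; destruct (H e He) as [N HN]; exists N; intros; apply HN; lia. Qed.

Lemma Un_cv_abs u l : Un_cv u l -> Un_cv (fun n => Rabs (u n)) (Rabs l).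
Proof.
  intros H e He; destruct (H e He) as [N HN]; exists N; intros n Hn.
  specialize (HN n Hn); unfold Rdist in *.
  eapply Rle_lt_trans; [apply Rabs_triang_inv2 | exact HN].
Qed.

(** Split [a] into the nonnegative series [(|a| + a)/2] and [(|a| - a)/2]. *)
Lemma series_cv_abs_bounded (a : nat -> R) B :
  (forall N, sum_f_R0 (fun k => Rabs (a k)) N <= B) -> {l | Un_cv (fun N => sum_f_R0 a N) l}.
Proof.
  intros HB.
  assert (Habs : {l | Un_cv (fun N => sum_f_R0 (fun k => Rabs (a k)) N) l}).
  { apply growing_cv.
    - intro n; simpl; pose proof (Rabs_pos (a (S n))); lra.
    - exists B; intros x [n ->]; apply HB. }
  assert (Hhalf : forall n, 0 <= (Rabs (a n) + a n) / 2 <= Rabs (a n)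
                         /\ 0 <= (Rabs (a n) - a n) / 2 <= Rabs (a n)).
  { intro n; pose proof (Rle_abs (a n)); pose proof (Rle_abs (- a n)); rewrite Rabs_Ropp in *.
    split; split; lra. }
  destruct (Rseries_CV_comp (fun k => (Rabs (a k) + a k) / 2) (fun k => Rabs (a k)))
    as [l1 H1]; [intro n; apply Hhalf | exact Habs |].
  destruct (Rseries_CV_comp (fun k => (Rabs (a k) - a k) / 2) (fun k => Rabs (a k)))
    as [l2 H2]; [intro n; apply Hhalf | exact Habs |].
  exists (l1 - l2).
  intros e He; destruct (CV_minus _ _ _ _ H1 H2 e He) as [N HN]; exists N; intros n Hn.
  replace (sum_f_R0 a n) with
      (sum_f_R0 (fun k => (Rabs (a k) + a k) / 2) n - sum_f_R0 (fun k => (Rabs (a k) - a k) / 2) n)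
    by (rewrite <- minus_sum; apply sum_eq; intros; field).
  apply HN; auto.
Qed.

Definition Zbounded_by (f : Z -> R) (B : R) : Prop := forall N, zpart (fun k => Rabs (f k)) N <= B.

Definition Zsummable (f : Z -> R) : Prop := exists B, Zbounded_by f B.

Lemma Zsum_cv f : Zsummable f -> Un_cv (zpart f) (Zsum f).
Proof.
  intros [B HB].
  destruct (series_cv_abs_bounded (fun k => f (Z.of_nat k) + f (- Z.of_nat (S k))%Z) B) as [l Hl].
  { intro N; eapply Rle_trans; [|apply (HB N)].
    unfold zpart; apply sum_Rle; intros; apply Rabs_triang. }
  unfold Zsum; rewrite (seq_lim_spec _ l); exact Hl.
Qed.

Lemma Zsum_unique f l : Un_cv (zpart f) l -> Zsum f = l.
Proof. apply seq_lim_spec. Qed.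

Lemma Zsum_ext f g : (forall k, f k = g k) -> Zsum f = Zsum g.
Proof. intros H; f_equal; apply functional_extensionality; auto. Qed.

Lemma Zsummable_ext f g : (forall k, f k = g k) -> Zsummable f -> Zsummable g.
Proof. intros H; replace g with f; auto; apply functional_extensionality; auto. Qed.

Lemma Zsummable_dom2 f1 f2 g c1 c2 : 0 <= c1 -> 0 <= c2 -> Zsummable f1 -> Zsummable f2 ->
  (forall k, Rabs (g k) <= c1 * Rabs (f1 k) + c2 * Rabs (f2 k)) -> Zsummable g.
Proof.
  intros H1 H2 [B1 HB1] [B2 HB2] H. exists (c1 * B1 + c2 * B2); intro N.
  eapply Rle_trans; [apply (zpart_le _ _ N H)|].
  rewrite zpart_plus, !zpart_scal.
  apply Rplus_le_compat; apply Rmult_le_compat_l; auto.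
Qed.

Lemma Zsummable_dom f g c : 0 <= c -> Zsummable f ->
  (forall k, Rabs (g k) <= c * Rabs (f k)) -> Zsummable g.
Proof.
  intros Hc Hf H; apply (Zsummable_dom2 f f g c 0); auto; try lra.
  intros k; rewrite Rmult_0_l, Rplus_0_r; auto.
Qed.

Lemma Zsummable_mul_bounded f w M : Zsummable f -> (forall k, Rabs (w k) <= M) ->
  Zsummable (fun k => f k * w k).
Proof.
  intros Hf Hw; apply (Zsummable_dom f _ M); auto.
  - pose proof (Hw 0%Z); pose proof (Rabs_pos (w 0%Z)); lra.
  - intros k; rewrite Rabs_mult, Rmult_comm; apply Rmult_le_compat_r; auto; apply Rabs_pos.
Qed.

Lemma Zsummable_plus f g : Zsummable f -> Zsummable g -> Zsummable (fun k => f k + g k).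
Proof.
  intros; apply (Zsummable_dom2 f g _ 1 1); auto; try lra.
  intros; rewrite !Rmult_1_l; apply Rabs_triang.
Qed.

Lemma Zsummable_scal c f : Zsummable f -> Zsummable (fun k => c * f k).
Proof. intros; apply (Zsummable_dom f _ (Rabs c)); auto; [apply Rabs_pos|]. intros; rewrite Rabs_mult; lra. Qed.

Lemma Zsummable_minus f g : Zsummable f -> Zsummable g -> Zsummable (fun k => f k - g k).
Proof.
  intros; apply (Zsummable_dom2 f g _ 1 1); auto; try lra.
  intros; rewrite !Rmult_1_l, <- (Rabs_Ropp (g _)); apply Rabs_triang.
Qed.

Lemma Zsummable_abs f : Zsummable f -> Zsummable (fun k => Rabs (f k)).
Proof. intros; apply (Zsummable_dom f _ 1); auto; try lra. intros; rewrite Rabs_Rabsolu; lra. Qed.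

Lemma Zsum_plus f g : Zsummable f -> Zsummable g -> Zsum (fun k => f k + g k) = Zsum f + Zsum g.
Proof.
  intros Hf Hg; apply Zsum_unique.
  intros e He; destruct (CV_plus _ _ _ _ (Zsum_cv f Hf) (Zsum_cv g Hg) e He) as [N HN].
  exists N; intros; rewrite zpart_plus; apply HN; auto.
Qed.

Lemma Zsum_scal c f : Zsummable f -> Zsum (fun k => c * f k) = c * Zsum f.
Proof.
  intros Hf; apply Zsum_unique.
  intros e He; destruct (CV_mult _ _ _ _ (Un_cv_const c) (Zsum_cv f Hf) e He) as [N HN].
  exists N; intros; rewrite zpart_scal; apply HN; auto.
Qed.

Lemma Zsum_minus f g : Zsummable f -> Zsummable g -> Zsum (fun k => f k - g k) = Zsum f - Zsum g.
Proof.
  intros Hf Hg.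
  rewrite (Zsum_ext _ (fun k => f k + (-1) * g k)) by (intros; ring).
  rewrite Zsum_plus, Zsum_scal; auto; [ring | apply Zsummable_scal; auto].
Qed.

Lemma Zsum_le f g : Zsummable f -> Zsummable g -> (forall k, f k <= g k) -> Zsum f <= Zsum g.
Proof.
  intros Hf Hg H. eapply Rle_cv_lim; [|apply Zsum_cv, Hf|apply Zsum_cv, Hg].
  intros; apply zpart_le; auto.
Qed.

Lemma Zsum_abs f : Zsummable f -> Rabs (Zsum f) <= Zsum (fun k => Rabs (f k)).
Proof.
  intros Hf. eapply Rle_cv_lim; [intro; apply zpart_abs | |].
  - exact (Un_cv_abs _ _ (Zsum_cv f Hf)).
  - apply Zsum_cv, Zsummable_abs, Hf.
Qed.

Lemma Zsum_le_bound f B : Zsummable f -> (forall N, zpart f N <= B) -> Zsum f <= B.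
Proof. intros Hf H. eapply Rle_cv_lim; [|apply Zsum_cv, Hf|apply Un_cv_const]. auto. Qed.

Lemma Zsum_abs_le f B : Zbounded_by f B -> Zsum (fun k => Rabs (f k)) <= B.
Proof.
  intros H; apply Zsum_le_bound; [apply Zsummable_abs; exists B; exact H|].
  exact H.
Qed.

Lemma zpart_le_Zsum f N : Zsummable f -> (forall k, 0 <= f k) -> zpart f N <= Zsum f.
Proof.
  intros Hf H. apply sum_incr; [apply Zsum_cv, Hf|].
  intros n; pose proof (H (Z.of_nat n)); pose proof (H (- Z.of_nat (S n))%Z); lra.
Qed.

Lemma Zsum_nonneg f : Zsummable f -> (forall k, 0 <= f k) -> 0 <= Zsum f.
Proof. intros; eapply Rle_trans; [apply (zpart_nonneg f 0)|apply zpart_le_Zsum]; auto. Qed.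

Lemma Zsum_indicator k x : Zsum (fun d => if Z.eq_dec d k then x else 0) = x.
Proof.
  apply Zsum_unique, (Un_cv_eventually_const _ _ (Z.abs_nat k)). intros N HN.
  rewrite zpart_indicator, in_window_large; auto.
Qed.

Lemma Zsummable_indicator k x : Zsummable (fun d => if Z.eq_dec d k then x else 0).
Proof.
  exists (Rabs x); intro N.
  rewrite (zpart_ext _ (fun d => if Z.eq_dec d k then Rabs x else 0))
    by (intro d; destruct (Z.eq_dec d k); [|rewrite Rabs_R0]; reflexivity).
  rewrite zpart_indicator; destruct (in_window N k); pose proof (Rabs_pos x); lra.
Qed.

Lemma Zbounded_by_term f B k : Zbounded_by f B -> Rabs (f k) <= B.
Proof.
  intros H. eapply Rle_trans; [|apply (H (Z.abs_nat k))].
  pose proof (zpart_indicator k (Rabs (f k)) (Z.abs_nat k)) as E.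
  rewrite in_window_large in E by lia. rewrite <- E. apply zpart_le.
  intros d; destruct (Z.eq_dec d k); [subst; lra | apply Rabs_pos].
Qed.

Lemma Zsummable_bounded X : Zsummable X -> exists M, forall j, Rabs (X j) <= M.
Proof. intros [B HB]; exists B; intros; apply Zbounded_by_term, HB. Qed.

Lemma Zsum_window f K : Zsum (fun d => if in_window K d then f d else 0) = zpart f K.
Proof.
  apply Zsum_unique, (Un_cv_eventually_const _ _ K). intros N HN.
  rewrite (zpart_eventually_const _ K) by (auto; intros d Hd; rewrite Hd; auto).
  apply zpart_ext_window; intros d Hd; rewrite Hd; auto.
Qed.

Lemma Zsummable_window f K : Zsummable (fun d => if in_window K d then f d else 0).
Proof.
  exists (zpart (fun d => Rabs (if in_window K d then f d else 0)) K). intros N.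
  destruct (le_lt_dec K N).
  - right; apply zpart_eventually_const; auto. intros d Hd; rewrite Hd; apply Rabs_R0.
  - apply zpart_incr; [intros; apply Rabs_pos | lia].
Qed.

Lemma Zbounded_by_shift f B z : Zbounded_by f B -> Zbounded_by (fun k => f (k + z)%Z) B.
Proof.
  assert (Hsucc : forall f, Zbounded_by f B -> Zbounded_by (fun k => f (k + 1)%Z) B).
  { intros g H N. rewrite (zpart_shift_succ (fun k => Rabs (g k))).
    specialize (H (S N)); rewrite zpart_S in H.
    pose proof (Rabs_pos (g (- Z.of_nat (S (S N)))%Z)); pose proof (Rabs_pos (g (- Z.of_nat (S N)))%Z).
    lra. }
  assert (Hpred : forall f, Zbounded_by f B -> Zbounded_by (fun k => f (k - 1)%Z) B).
  { intros g H N. rewrite (zpart_shift_pred (fun k => Rabs (g k))).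
    specialize (H (S N)); rewrite zpart_S in H.
    pose proof (Rabs_pos (g (Z.of_nat (S N)))); pose proof (Rabs_pos (g (Z.of_nat N))). lra. }
  revert f; induction z as [|z IHz|z IHz] using Z.peano_ind; intros f H N.
  - eapply Rle_trans; [right | apply (H N)].
    apply zpart_ext; intros; rewrite Z.add_0_r; auto.
  - eapply Rle_trans; [right | apply (IHz _ (Hsucc f H) N)].
    apply zpart_ext; intros; do 2 f_equal; lia.
  - eapply Rle_trans; [right | apply (IHz _ (Hpred f H) N)].
    apply zpart_ext; intros; do 2 f_equal; lia.
Qed.

Lemma Zsummable_shift f z : Zsummable f -> Zsummable (fun k => f (k + z)%Z).
Proof. intros [B H]; exists B; apply Zbounded_by_shift, H. Qed.

Lemma Zsummable_tails f :
  Zsummable f -> Un_cv (fun N => f (Z.of_nat N)) 0 /\ Un_cv (fun N => f (- Z.of_nat N)%Z) 0.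
Proof.
  intros Hf. pose proof (Zsum_cv _ (Zsummable_abs f Hf)) as Hc.
  split; intros e He; destruct (Hc (e / 2)) as [N0 HN0]; try lra.
  - exists (S N0); intros n Hn; destruct n; [lia|].
    pose proof (HN0 (S n) ltac:(lia)) as H1; pose proof (HN0 n ltac:(lia)) as H2.
    rewrite zpart_S in H1. unfold Rdist in *. rewrite Rminus_0_r.
    pose proof (Rabs_pos (f (- Z.of_nat (S (S n)))%Z)).
    apply Rabs_def2 in H1; apply Rabs_def2 in H2; lra.
  - exists (S (S N0)); intros n Hn; do 2 (destruct n; [lia|]).
    pose proof (HN0 (S n) ltac:(lia)) as H1; pose proof (HN0 n ltac:(lia)) as H2.
    rewrite zpart_S in H1. unfold Rdist in *. rewrite Rminus_0_r.
    pose proof (Rabs_pos (f (Z.of_nat (S n)))).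
    apply Rabs_def2 in H1; apply Rabs_def2 in H2; lra.
Qed.

Lemma Zsum_shift f z : Zsummable f -> Zsum (fun k => f (k + z)%Z) = Zsum f.
Proof.
  assert (Hsucc : forall f, Zsummable f -> Zsum (fun k => f (k + 1)%Z) = Zsum f).
  { intros g Hg. apply Zsum_unique. destruct (Zsummable_tails g Hg) as [T1 T2].
    intros e He.
    destruct (CV_plus _ _ _ _ (CV_minus _ _ _ _ (Zsum_cv g Hg) (Un_cv_S _ _ T2)) (Un_cv_S _ _ T1) e He)
      as [N HN].
    exists N; intros n Hn. rewrite zpart_shift_succ.
    specialize (HN n Hn); simpl in HN. rewrite Rminus_0_r, Rplus_0_r in HN. exact HN. }
  assert (Hpred : forall f, Zsummable f -> Zsum (fun k => f (k - 1)%Z) = Zsum f).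
  { intros g Hg. apply Zsum_unique. destruct (Zsummable_tails g Hg) as [T1 T2].
    intros e He.
    destruct (CV_plus _ _ _ _ (CV_minus _ _ _ _ (Zsum_cv g Hg) T1) (Un_cv_S _ _ (Un_cv_S _ _ T2)) e He)
      as [N HN].
    exists N; intros n Hn. rewrite zpart_shift_pred.
    specialize (HN n Hn); simpl in HN. rewrite Rminus_0_r, Rplus_0_r in HN. exact HN. }
  revert f; induction z as [|z IHz|z IHz] using Z.peano_ind; intros f H.
  - apply Zsum_ext; intros; rewrite Z.add_0_r; auto.
  - rewrite <- (Hsucc f H), <- (IHz (fun k => f (k + 1)%Z)) by (apply Zsummable_shift; auto).
    apply Zsum_ext; intros; f_equal; lia.
  - rewrite <- (Hpred f H), <- (IHz (fun k => f (k - 1)%Z))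
      by (apply (Zsummable_ext (fun k => f (k + -1)%Z)); [reflexivity | apply Zsummable_shift; auto]).
    apply Zsum_ext; intros; f_equal; lia.
Qed.

Definition vanishes_at_neg_inf (w : Z -> R) : Prop :=
  forall e, 0 < e -> exists K, forall i, (i <= K)%Z -> Rabs (w i) < e.

Lemma Zsummable_vanishes f : Zsummable f -> vanishes_at_neg_inf f.
Proof.
  intros Hf e He. destruct (proj2 (Zsummable_tails f Hf) e He) as [N HN].
  exists (- Z.of_nat N)%Z; intros i Hi. specialize (HN (Z.to_nat (- i)) ltac:(lia)).
  unfold Rdist in HN; rewrite Rminus_0_r in HN.
  replace (- Z.of_nat (Z.to_nat (- i)))%Z with i in HN by lia. exact HN.
Qed.

Lemma zpart_Zsum_swap (H : Z -> Z -> R) N : (forall i, Zsummable (H i)) ->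
  Zsummable (fun j => zpart (fun i => H i j) N) /\
  zpart (fun i => Zsum (H i)) N = Zsum (fun j => zpart (fun i => H i j) N).
Proof.
  intros Hs. induction N as [|N [IH1 IH2]].
  - split.
    + eapply Zsummable_ext; [|apply (Zsummable_plus _ _ (Hs 0%Z) (Hs (-1)%Z))]. reflexivity.
    + rewrite zpart_0, <- Zsum_plus by auto. reflexivity.
  - split.
    + eapply Zsummable_ext; [|apply (Zsummable_plus _ _ IH1
        (Zsummable_plus _ _ (Hs (Z.of_nat (S N))) (Hs (- Z.of_nat (S (S N)))%Z)))].
      reflexivity.
    + rewrite zpart_S, IH2, <- (Zsum_plus (H _)), <- Zsum_plus by (try apply Zsummable_plus; auto).
      reflexivity.
Qed.

Definition upto_part (g : Z -> R) (i : Z) (M : nat) : R :=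
  sum_f_R0 (fun k => g (i - Z.of_nat k)%Z) M.

Lemma upto_part_abs_le g B i M :
  Zbounded_by g B -> sum_f_R0 (fun k => Rabs (g (i - Z.of_nat k)%Z)) M <= B.
Proof.
  intros H. eapply Rle_trans; [|apply (Zbounded_by_shift g B (i + 1) H M)].
  unfold zpart. apply sum_Rle; intros k _.
  replace (- Z.of_nat (S k) + (i + 1))%Z with (i - Z.of_nat k)%Z by lia.
  pose proof (Rabs_pos (g (Z.of_nat k + (i + 1))%Z)); lra.
Qed.

Lemma Zsum_upto_cv g i : Zsummable g -> Un_cv (upto_part g i) (Zsum_upto g i).
Proof.
  intros [B H]. destruct (series_cv_abs_bounded (fun k => g (i - Z.of_nat k)%Z) B) as [l Hl].
  { intros; apply upto_part_abs_le; auto. }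
  unfold Zsum_upto; rewrite (seq_lim_spec _ l); auto.
Qed.

Lemma Zsum_upto_unique g i l : Un_cv (upto_part g i) l -> Zsum_upto g i = l.
Proof. apply seq_lim_spec. Qed.

Lemma upto_part_S g i M : upto_part g i (S M) = g i + upto_part g (i - 1)%Z M.
Proof.
  unfold upto_part. rewrite decomp_sum by lia. simpl pred. rewrite Z.sub_0_r. f_equal.
  apply sum_eq; intros; f_equal; lia.
Qed.

Lemma Zsum_upto_rec g i : Zsummable g -> Zsum_upto g i = g i + Zsum_upto g (i - 1)%Z.
Proof.
  intros Hg.
  assert (H : Un_cv (upto_part g (i - 1)) (Zsum_upto g i - g i)).
  { intros e He; destruct (Un_cv_S _ _ (Zsum_upto_cv g i Hg) e He) as [N HN].
    exists N; intros n Hn; specialize (HN n Hn).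
    rewrite upto_part_S in HN; unfold Rdist in *.
    replace (upto_part g (i - 1) n - (Zsum_upto g i - g i))
      with (g i + upto_part g (i - 1) n - Zsum_upto g i) by ring. auto. }
  rewrite (UL_sequence _ _ _ (Zsum_upto_cv g (i - 1) Hg) H). ring.
Qed.

Lemma Zsum_upto_abs_le g B i : Zbounded_by g B -> Rabs (Zsum_upto g i) <= B.
Proof.
  intros H. eapply Rle_cv_lim; [| apply Un_cv_abs, Zsum_upto_cv; exists B; exact H | apply Un_cv_const].
  intros n; eapply Rle_trans; [apply Rsum_abs | apply upto_part_abs_le, H].
Qed.

Lemma Zsum_upto_abs g i : Zsummable g -> Rabs (Zsum_upto g i) <= Zsum_upto (fun k => Rabs (g k)) i.
Proof.
  intros Hs. eapply Rle_cv_lim; [intro; apply Rsum_abs | |].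
  - exact (Un_cv_abs _ _ (Zsum_upto_cv g i Hs)).
  - exact (Zsum_upto_cv _ i (Zsummable_abs _ Hs)).
Qed.

Lemma Zsum_upto_nonneg_mono x i j : Zsummable x -> (forall k, 0 <= x k) ->
  Zsum_upto x (i - Z.of_nat j) <= Zsum_upto x i.
Proof.
  intros Hx Hpos; induction j as [|j IH]; [rewrite Z.sub_0_r; lra|].
  pose proof (Zsum_upto_rec x (i - Z.of_nat j) Hx) as E.
  replace (i - Z.of_nat (S j))%Z with (i - Z.of_nat j - 1)%Z by lia.
  pose proof (Hpos (i - Z.of_nat j)%Z); lra.
Qed.

Lemma Zsum_upto_neg x m : Zsummable x ->
  Zsum_upto x (- Z.of_nat (S m))%Z = Zsum_upto x 0 - upto_part x 0 m.
Proof.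
  intros Hx; induction m as [|m IH].
  - rewrite (Zsum_upto_rec x 0) by auto. unfold upto_part; simpl. ring.
  - pose proof (Zsum_upto_rec x (- Z.of_nat (S m)) Hx) as E.
    replace (- Z.of_nat (S m) - 1)%Z with (- Z.of_nat (S (S m)))%Z in E by lia.
    unfold upto_part in *; rewrite tech5.
    replace (0 - Z.of_nat (S m))%Z with (- Z.of_nat (S m))%Z by lia. lra.
Qed.

Lemma Zsum_upto_vanishes g : Zsummable g -> vanishes_at_neg_inf (Zsum_upto g).
Proof.
  intros Hs e He.
  set (x := fun k => Rabs (g k)).
  assert (Hx : Zsummable x) by (apply Zsummable_abs; auto).
  assert (Hxpos : forall k, 0 <= x k) by (intro; apply Rabs_pos).
  destruct (Zsum_upto_cv x 0 Hx e He) as [M0 HM0].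
  specialize (HM0 M0 (le_n _)); unfold Rdist in HM0; apply Rabs_def2 in HM0.
  exists (- Z.of_nat (S M0))%Z. intros i Hi.
  eapply Rle_lt_trans; [apply Zsum_upto_abs; auto|]. fold x.
  replace i with (- Z.of_nat (S M0) - Z.of_nat (Z.to_nat (- Z.of_nat (S M0) - i)))%Z by lia.
  eapply Rle_lt_trans; [apply Zsum_upto_nonneg_mono; auto|].
  rewrite Zsum_upto_neg by auto. lra.
Qed.

Lemma Zsum_mul_window_le h X M e K : Zsummable h -> (forall k, Rabs (X k) <= M) -> 0 <= e ->
  (forall d, in_window K d = true -> Rabs (X d) <= e) ->
  Rabs (Zsum (fun d => h d * X d))
  <= e * Zsum (fun d => Rabs (h d)) + M * (Zsum (fun d => Rabs (h d)) - zpart (fun d => Rabs (h d)) K).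
Proof.
  intros Hh HX He Hin.
  set (x := fun d => Rabs (h d)); set (xin := fun d => if in_window K d then x d else 0).
  assert (Hx : Zsummable x) by (apply Zsummable_abs; auto).
  assert (Hprod : Zsummable (fun d => h d * X d)) by (apply (Zsummable_mul_bounded h _ M); auto).
  eapply Rle_trans; [apply Zsum_abs, Hprod|].
  eapply Rle_trans.
  { apply (Zsum_le _ (fun d => e * x d + M * (x d - xin d))).
    - apply Zsummable_abs, Hprod.
    - apply Zsummable_plus; apply Zsummable_scal; [|apply Zsummable_minus, Zsummable_window]; auto.
    - intros d. rewrite Rabs_mult. fold (x d). unfold xin.
      assert (Hxd : 0 <= x d) by apply Rabs_pos.
      destruct (in_window K d) eqn:Ed.
      + rewrite Rminus_diag, Rmult_0_r, Rplus_0_r, (Rmult_comm e).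
        apply Rmult_le_compat_l; auto.
      + rewrite Rminus_0_r, (Rmult_comm M).
        pose proof (Rmult_le_compat_l _ _ _ Hxd (HX d)). pose proof (Rmult_le_pos _ _ He Hxd). lra. }
  rewrite Zsum_plus, !Zsum_scal, Zsum_minus by
    (try apply Zsummable_minus; try apply Zsummable_scal; try apply Zsummable_minus;
     try apply Zsummable_window; auto).
  unfold xin; rewrite Zsum_window. apply Rle_refl.
Qed.

Lemma Zsum_mul_shift_vanishes h X M : Zsummable h -> (forall k, Rabs (X k) <= M) ->
  vanishes_at_neg_inf X -> vanishes_at_neg_inf (fun m => Zsum (fun d => h d * X (d + m)%Z)).
Proof.
  intros Hh HX HT e He.
  set (x := fun d => Rabs (h d)).
  assert (Hx : Zsummable x) by (apply Zsummable_abs; auto).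
  set (Hs := Zsum x).
  assert (HHs : 0 <= Hs) by (apply Zsum_nonneg; auto; intro; apply Rabs_pos).
  assert (HM : 0 <= M) by (pose proof (HX 0%Z); pose proof (Rabs_pos (X 0%Z)); lra).
  set (e1 := e / (Hs + M + 1)).
  assert (He1 : 0 < e1) by (apply Rdiv_lt_0_compat; lra).
  assert (E1 : e1 * (Hs + M + 1) = e) by (unfold e1; field; lra).
  destruct (Zsum_cv x Hx e1 He1) as [K HK]. specialize (HK K (le_n _)). unfold Rdist in HK.
  assert (HK' : Hs - zpart x K < e1).
  { pose proof (zpart_le_Zsum x K Hx (fun d => Rabs_pos (h d))).
    apply Rabs_def2 in HK; unfold Hs in *; lra. }
  destruct (HT e1 He1) as [T HT1].
  exists (T - Z.of_nat K)%Z. intros m Hm.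
  eapply Rle_lt_trans; [apply (Zsum_mul_window_le h (fun d => X (d + m)%Z) M e1 K); auto; try lra|].
  - intros d Hd; apply in_window_spec in Hd. left; apply HT1; lia.
  - fold x Hs. assert (M * (Hs - zpart x K) <= M * e1) by (apply Rmult_le_compat_l; lra). nra.
Qed.

Lemma zpart_matrix_apply_le (A : Z -> Z -> R) (y : Z -> R) N :
  (forall j N, zpart (fun i => A i j) N <= 1) ->
  (forall i, Zsummable (fun j => A i j * y j)) -> Zsummable y -> (forall j, 0 <= y j) ->
  zpart (fun i => Zsum (fun j => A i j * y j)) N <= Zsum y.
Proof.
  intros Hcol Hrow Hy Hy0.
  destruct (zpart_Zsum_swap (fun i j => A i j * y j) N Hrow) as [Hs ->].
  apply Zsum_le; auto. intros j.
  rewrite (zpart_ext _ (fun i => y j * A i j)) by (intros; ring).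
  rewrite zpart_scal. specialize (Hcol j N). specialize (Hy0 j). nra.
Qed.

Definition band (t : Z) (x : Z -> R) (i j : Z) : R := if Z.eq_dec j (i + t) then x j else 0.

Lemma band_mul_ext t x y i :
  forall j, band t x i j * y j = if Z.eq_dec j (i + t) then x j * y j else 0.
Proof. intros j; unfold band; destruct (Z.eq_dec j (i + t)); ring. Qed.

Lemma Zsummable_band_mul t x y i : Zsummable (fun j => band t x i j * y j).
Proof.
  apply (Zsummable_ext (fun j => if Z.eq_dec j (i + t) then x (i + t)%Z * y (i + t)%Z else 0));
    [|apply Zsummable_indicator].
  intros j; rewrite band_mul_ext; destruct (Z.eq_dec j (i + t)); subst; reflexivity.
Qed.

Lemma Zsum_band_mul t x y i : Zsum (fun j => band t x i j * y j) = x (i + t)%Z * y (i + t)%Z.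
Proof.
  rewrite <- (Zsum_indicator (i + t) (x (i + t)%Z * y (i + t)%Z)).
  apply Zsum_ext; intros j; rewrite band_mul_ext; destruct (Z.eq_dec j (i + t)); subst; reflexivity.
Qed.

Lemma zpart_band_le t x j N : 0 <= x j -> zpart (fun i => band t x i j) N <= x j.
Proof.
  intros Hx. unfold band. rewrite (zpart_ext _ (fun i => if Z.eq_dec i (j - t) then x j else 0)).
  - rewrite zpart_indicator; destruct (in_window N (j - t)); lra.
  - intros i; destruct (Z.eq_dec j (i + t)), (Z.eq_dec i (j - t)); auto; lia.
Qed.

(** * The weights [G^i_j] *)

Section Kernel.
Variables lam c dx : R.
Hypothesis Hlam : 0 < lam < 1.
Hypothesis Hc : 0 < c.

Definition kernel_scale : R := Rpower dx (1 - lam) * (c / (lam * (1 - lam))).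
Definition kernel_pow (m : Z) : R := pw (Rabs (IZR m)) (1 - lam).
Definition Gker (m : Z) : R := Gw lam c dx 0 m.

Lemma kernel_scale_pos : 0 < kernel_scale.
Proof.
  apply Rmult_lt_0_compat; [apply exp_pos|].
  apply Rdiv_lt_0_compat; auto. apply Rmult_lt_0_compat; lra.
Qed.

Lemma Gker_formula m :
  Gker m = kernel_scale * (2 * kernel_pow m - kernel_pow (m + 1) - kernel_pow (m - 1)).
Proof. unfold Gker, Gw, kernel_scale, kernel_pow. rewrite Z.sub_0_r, plus_IZR, minus_IZR. reflexivity. Qed.

Lemma Gw_translation i j : Gw lam c dx i j = Gker (j - i).
Proof. unfold Gker, Gw. rewrite Z.sub_0_r. reflexivity. Qed.

Lemma kernel_pow_opp m : kernel_pow (- m) = kernel_pow m.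
Proof. unfold kernel_pow. rewrite opp_IZR, Rabs_Ropp; auto. Qed.

Lemma pw_pos x : 0 < x -> pw x (1 - lam) = Rpower x (1 - lam).
Proof. intros; unfold pw; destruct (Rle_dec x 0); auto; lra. Qed.

Lemma kernel_pow_0 : kernel_pow 0 = 0.
Proof. unfold kernel_pow, pw. rewrite Rabs_R0. destruct (Rle_dec 0 0); auto; lra. Qed.

Lemma kernel_pow_1 : kernel_pow 1 = 1.
Proof. unfold kernel_pow. rewrite Rabs_R1, pw_pos by lra. unfold Rpower; rewrite ln_1, Rmult_0_r; apply exp_0. Qed.

Lemma kernel_pow_m1 : kernel_pow (-1) = 1.
Proof. exact (eq_trans (kernel_pow_opp 1) kernel_pow_1). Qed.

Lemma kernel_pow_nat_incr (N M : nat) : (N <= M)%nat ->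
  kernel_pow (Z.of_nat N) <= kernel_pow (Z.of_nat M).
Proof.
  intros H; unfold kernel_pow, pw. rewrite <- !INR_IZR_INZ, !Rabs_pos_eq by apply pos_INR.
  pose proof (le_INR _ _ H).
  destruct (Rle_dec (INR N) 0), (Rle_dec (INR M) 0); try lra.
  - left; apply exp_pos.
  - apply Rle_Rpower_l; lra.
Qed.

(** Two mean-value steps with the decreasing derivative [(1-lam) z^(-lam)]. *)
Lemma rpower_concave_step x : 1 < x ->
  Rpower (x + 1) (1 - lam) + Rpower (x - 1) (1 - lam) <= 2 * Rpower x (1 - lam).
Proof.
  intros Hx.
  set (d := fun y => (1 - lam) * Rpower y (1 - lam - 1)).
  assert (D : forall y, 0 < y -> derivable_pt_lim (fun z => Rpower z (1 - lam)) y (d y))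
    by (intros; apply derivable_pt_lim_power; auto).
  destruct (MVT_cor2 (fun z => Rpower z (1 - lam)) d x (x + 1)) as [c1 [E1 H1]];
    [lra | intros; apply D; lra |].
  destruct (MVT_cor2 (fun z => Rpower z (1 - lam)) d (x - 1) x) as [c2 [E2 H2]];
    [lra | intros; apply D; lra |].
  assert (Hdec : Rpower c1 (1 - lam - 1) <= Rpower c2 (1 - lam - 1)).
  { left; apply exp_increasing. pose proof (ln_increasing c2 c1 ltac:(lra) ltac:(lra)). nra. }
  unfold d in *.
  replace (x + 1 - x) with 1 in E1 by ring. replace (x - (x - 1)) with 1 in E2 by ring.
  assert (0 < 1 - lam) by lra. nra.
Qed.

Lemma Gker_even m : Gker (- m) = Gker m.
Proof.
  rewrite !Gker_formula, kernel_pow_opp.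
  replace (- m + 1)%Z with (- (m - 1))%Z by lia. replace (- m - 1)%Z with (- (m + 1))%Z by lia.
  rewrite !kernel_pow_opp. ring.
Qed.

Lemma Gker_nonneg m : m <> 0%Z -> 0 <= Gker m.
Proof.
  assert (Hpos : forall m, (1 <= m)%Z -> 0 <= Gker m).
  { intros k Hk. rewrite Gker_formula. apply Rmult_le_pos; [left; apply kernel_scale_pos|].
    destruct (Z.eq_dec k 1) as [->|Hk1].
    - simpl (1 - 1)%Z; simpl (1 + 1)%Z. rewrite kernel_pow_1, kernel_pow_0.
      unfold kernel_pow; simpl IZR. rewrite Rabs_right, pw_pos by lra.
      assert (Rpower 2 (1 - lam) <= Rpower 2 1) by (apply Rle_Rpower; lra).
      rewrite Rpower_1 in H by lra. lra.
    - unfold kernel_pow. rewrite plus_IZR, minus_IZR.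
      assert (1 < IZR k) by (apply IZR_lt; lia).
      rewrite !Rabs_right, !pw_pos by lra.
      pose proof (rpower_concave_step (IZR k) H). simpl IZR. lra. }
  intros Hm. destruct (Z_lt_le_dec 0 m); [apply Hpos; lia|].
  rewrite <- Gker_even; apply Hpos; lia.
Qed.

Lemma Gker_0 : Gker 0 = - (dlam lam c * Rpower dx (1 - lam)).
Proof.
  rewrite Gker_formula. simpl (0 + 1)%Z; simpl (0 - 1)%Z.
  rewrite kernel_pow_0, kernel_pow_m1, kernel_pow_1.
  unfold kernel_scale, dlam. field. lra.
Qed.

Lemma Gker_0_neg : Gker 0 < 0.
Proof.
  rewrite Gker_0. pose proof (exp_pos ((1 - lam) * ln dx)).
  assert (0 < dlam lam c) by (unfold dlam; apply Rmult_lt_0_compat; auto;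
    apply Rplus_lt_0_compat; apply Rdiv_lt_0_compat; lra).
  unfold Rpower; nra.
Qed.

(** The second differences telescope. *)
Lemma zpart_Gker N :
  zpart Gker N = kernel_scale * (kernel_pow (Z.of_nat N) - kernel_pow (Z.of_nat N + 2)).
Proof.
  induction N as [|N IHN].
  - rewrite zpart_0, !Gker_formula. simpl.
    rewrite kernel_pow_m1, kernel_pow_1, (kernel_pow_opp 2 : kernel_pow (-2) = _), kernel_pow_0. ring.
  - rewrite zpart_S, IHN, !Gker_formula.
    replace (- Z.of_nat (S (S N)) + 1)%Z with (- (Z.of_nat (S N)))%Z by lia.
    replace (- Z.of_nat (S (S N)) - 1)%Z with (- (Z.of_nat N + 3))%Z by lia.
    replace (- Z.of_nat (S (S N)))%Z with (- (Z.of_nat N + 2))%Z by lia.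
    rewrite !kernel_pow_opp.
    replace (Z.of_nat (S N) + 1)%Z with (Z.of_nat N + 2)%Z by lia.
    replace (Z.of_nat (S N) - 1)%Z with (Z.of_nat N) by lia.
    replace (Z.of_nat (S N) + 2)%Z with (Z.of_nat N + 3)%Z by lia.
    replace (Z.of_nat (S N)) with (Z.of_nat N + 1)%Z by lia. ring.
Qed.

Lemma zpart_Gker_nonpos N : zpart Gker N <= 0.
Proof.
  rewrite zpart_Gker. pose proof kernel_scale_pos.
  replace (Z.of_nat N + 2)%Z with (Z.of_nat (N + 2)) by lia.
  pose proof (kernel_pow_nat_incr N (N + 2) ltac:(lia)). nra.
Qed.

Definition Gmass : R := - 2 * Gker 0.

Lemma Gmass_pos : 0 < Gmass.
Proof. unfold Gmass; pose proof Gker_0_neg; lra. Qed.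

Lemma Gker_bounded : Zbounded_by Gker Gmass.
Proof.
  intros N.
  rewrite (zpart_ext _ (fun m => Gker m + (if Z.eq_dec m 0 then Gmass else 0))).
  - rewrite zpart_plus, zpart_indicator, in_window_large by (simpl; lia).
    pose proof (zpart_Gker_nonpos N); lra.
  - intros m; unfold Gmass; destruct (Z.eq_dec m 0) as [->|Hm].
    + rewrite Rabs_left by apply Gker_0_neg. ring.
    + rewrite Rabs_right by (apply Rle_ge, Gker_nonneg; auto). ring.
Qed.

Lemma Gker_summable : Zsummable Gker.
Proof. exists Gmass; apply Gker_bounded. Qed.

Lemma Zsum_Gker_nonpos : Zsum Gker <= 0.
Proof. apply Zsum_le_bound; [apply Gker_summable | apply zpart_Gker_nonpos]. Qed.

Lemma Gw_row_bounded i : Zbounded_by (fun j => Gw lam c dx i j) Gmass.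
Proof.
  intros N. eapply Rle_trans; [right | apply (Zbounded_by_shift Gker Gmass (- i) Gker_bounded N)].
  apply zpart_ext; intros; rewrite Gw_translation; do 3 f_equal; lia.
Qed.

Lemma Gw_col_bounded j : Zbounded_by (fun i => Gw lam c dx i j) Gmass.
Proof.
  intros N. eapply Rle_trans; [right | apply (Zbounded_by_shift Gker Gmass (- j) Gker_bounded N)].
  apply zpart_ext; intros; rewrite Gw_translation, <- Gker_even; do 3 f_equal; lia.
Qed.

(** The nonnegative part of [G]; only the diagonal [G^i_i] is negative. *)
Definition Goff (i j : Z) : R := if Z.eq_dec j i then 0 else Gw lam c dx i j.

Lemma Goff_nonneg i j : 0 <= Goff i j.
Proof. unfold Goff; destruct (Z.eq_dec j i); [lra|]. rewrite Gw_translation; apply Gker_nonneg; lia. Qed.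

Lemma Goff_sym i j : Goff i j = Goff j i.
Proof.
  unfold Goff. destruct (Z.eq_dec j i), (Z.eq_dec i j); try lia; auto.
  rewrite !Gw_translation, <- Gker_even; f_equal; lia.
Qed.

Lemma Gw_split i j : Gw lam c dx i j = Goff i j + (if Z.eq_dec j i then Gker 0 else 0).
Proof. unfold Goff; destruct (Z.eq_dec j i) as [->|]; [rewrite Gw_translation, Z.sub_diag|]; ring. Qed.

Lemma Goff_row_summable i : Zsummable (Goff i).
Proof.
  apply (Zsummable_dom (fun j => Gw lam c dx i j) _ 1); [lra | exists Gmass; apply Gw_row_bounded |].
  intros j; unfold Goff; destruct (Z.eq_dec j i); [rewrite Rabs_R0; pose proof (Rabs_pos (Gw lam c dx i j))|]; lra.
Qed.

Lemma Goff_row_sum_le i : Zsum (Goff i) <= - Gker 0.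
Proof.
  assert (Hrow : Zsum (fun j => Gw lam c dx i j) = Zsum Gker).
  { rewrite <- (Zsum_shift Gker (- i) Gker_summable).
    apply Zsum_ext; intros; rewrite Gw_translation; f_equal; lia. }
  rewrite (Zsum_ext _ (fun j => Goff i j + (if Z.eq_dec j i then Gker 0 else 0))) in Hrow
    by apply Gw_split.
  rewrite Zsum_plus, Zsum_indicator in Hrow by (apply Goff_row_summable || apply Zsummable_indicator).
  pose proof Zsum_Gker_nonpos; lra.
Qed.

Lemma Goff_col_summable j : Zsummable (fun i => Goff i j).
Proof. eapply Zsummable_ext; [|apply (Goff_row_summable j)]. intros; apply Goff_sym. Qed.

Lemma Goff_col_sum_le j : Zsum (fun i => Goff i j) <= - Gker 0.
Proof. rewrite (Zsum_ext _ (Goff j)) by (intros; apply Goff_sym). apply Goff_row_sum_le. Qed.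

End Kernel.

(** * Slopes, Riemann integrals and the initial cell averages *)

Definition slope (g : R -> R) (u u' : R) : R :=
  if Req_EM_T u' u then 0 else (g u' - g u) / (u' - u).

Lemma slope_spec g u u' : g u' - g u = slope g u u' * (u' - u).
Proof. unfold slope; destruct (Req_EM_T u' u) as [->|]; [ring | field; lra]. Qed.

Lemma slope_bounds g K u u' :
  (forall x y, x <= y -> 0 <= g y - g x <= K * (y - x)) -> 0 <= slope g u u' <= K.
Proof.
  intros H. pose proof (H 0 1 ltac:(lra)) as HK.
  assert (Hq : forall x y, x < y -> 0 <= (g y - g x) / (y - x) <= K).
  { intros x y Hxy. specialize (H x y ltac:(lra)).
    assert (Hinv : 0 < / (y - x)) by (apply Rinv_0_lt_compat; lra).
    split; [apply Rmult_le_pos; lra|].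
    apply Rmult_le_reg_r with (y - x); [lra|]. unfold Rdiv; rewrite Rmult_assoc, Rinv_l; lra. }
  unfold slope; destruct (Req_EM_T u' u); [lra|].
  destruct (Rlt_dec u u'); [apply Hq; lra|].
  replace ((g u' - g u) / (u' - u)) with ((g u - g u') / (u - u')) by (field; lra).
  apply Hq; lra.
Qed.

Lemma increment_bounds_of_derivative (phi phi' : R -> R) K :
  (forall s, derivable_pt_lim phi s (phi' s)) -> (forall s, Rabs (phi' s) <= K) ->
  (forall x y, x <= y -> phi x <= phi y) ->
  forall x y, x <= y -> 0 <= phi y - phi x <= K * (y - x).
Proof.
  intros Hd HK Hm x y Hxy. split; [pose proof (Hm x y Hxy); lra|].
  destruct (Req_dec x y) as [->|Hne]; [lra|].
  destruct (MVT_cor2 phi phi' x y ltac:(lra)) as [t [E _]]; [intros; apply Hd|].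
  rewrite E. apply Rmult_le_compat_r; [lra|].
  pose proof (HK t); pose proof (Rle_abs (phi' t)); lra.
Qed.

Lemma Rint_RiemannInt f x y (pr : Riemann_integrable f x y) : Rint f x y = RiemannInt pr.
Proof.
  unfold Rint.
  destruct (epsilon_spec (inhabits 0) (fun I => exists pr, RiemannInt pr = I)
    (ex_intro _ (RiemannInt pr) (ex_intro _ pr eq_refl))) as [pr' E].
  rewrite <- E. apply RiemannInt_P5.
Qed.

Lemma Rint_chasles f x y z :
  inhabited (Riemann_integrable f x y) -> inhabited (Riemann_integrable f y z) ->
  inhabited (Riemann_integrable f x z) -> Rint f x y + Rint f y z = Rint f x z.
Proof.
  intros [p1] [p2] [p3].
  rewrite (Rint_RiemannInt f x y p1), (Rint_RiemannInt f y z p2), (Rint_RiemannInt f x z p3).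
  apply RiemannInt_P26.
Qed.

Lemma Rint_ge_const f x y lo : inhabited (Riemann_integrable f x y) -> x <= y ->
  (forall t, lo <= f t) -> lo * (y - x) <= Rint f x y.
Proof.
  intros [pr] Hxy Hb. rewrite (Rint_RiemannInt f x y pr).
  rewrite <- (RiemannInt_P15 (RiemannInt_P14 x y lo)). apply RiemannInt_P19; auto.
Qed.

Lemma Rint_le_const f x y hi : inhabited (Riemann_integrable f x y) -> x <= y ->
  (forall t, f t <= hi) -> Rint f x y <= hi * (y - x).
Proof.
  intros [pr] Hxy Hb. rewrite (Rint_RiemannInt f x y pr).
  rewrite <- (RiemannInt_P15 (RiemannInt_P14 x y hi)). apply RiemannInt_P19; auto.
Qed.

Lemma Lipschitz_continuity g : Lipschitz g -> forall x, continuity_pt g x.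
Proof.
  intros [L HL] x eps He.
  exists (eps / (Rabs L + 1)). split; [apply Rdiv_lt_0_compat; pose proof (Rabs_pos L); lra|].
  intros y [_ Hy]. simpl in *. unfold R_dist in *.
  pose proof (Rabs_pos L); pose proof (Rle_abs L); pose proof (Rabs_pos (y - x)).
  assert (Rabs (y - x) * (Rabs L + 1) < eps).
  { apply (Rmult_lt_compat_r (Rabs L + 1)) in Hy; [|lra].
    unfold Rdiv in Hy; rewrite Rmult_assoc, Rinv_l in Hy; lra. }
  eapply Rle_lt_trans; [apply HL|]. nra.
Qed.

Lemma Lipschitz_Riemann_integrable g : Lipschitz g -> forall x y, inhabited (Riemann_integrable g x y).
Proof.
  intros Hg x y. constructor. pose proof (Lipschitz_continuity g Hg).
  destruct (Rle_dec x y).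
  - apply continuity_implies_RiemannInt; auto.
  - apply RiemannInt_P1, continuity_implies_RiemannInt; auto; lra.
Qed.

Section InitialData.
Variables (u0 : R -> R) (dx : R).
Hypothesis Hdx : 0 < dx.
Hypothesis Hu0 : integrable_L1 u0.

Let ua := fun t => Rabs (u0 t).

Lemma abs_u0_integrable x y : inhabited (Riemann_integrable ua x y).
Proof. destruct (proj1 Hu0 x y) as [pr]. constructor. exact (RiemannInt_P16 pr). Qed.

Lemma Rint_abs_u0_nonneg x y : x <= y -> 0 <= Rint ua x y.
Proof.
  intros Hxy. rewrite <- (Rmult_0_l (y - x)).
  apply Rint_ge_const; auto; [apply abs_u0_integrable | intro; apply Rabs_pos].
Qed.

Lemma Rint_abs_u0_chasles x y z : Rint ua x y + Rint ua y z = Rint ua x z.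
Proof. apply Rint_chasles; apply abs_u0_integrable. Qed.

Definition cell_mass (i : Z) : R := Rint ua (IZR i * dx) (IZR (i + 1) * dx).

Lemma zpart_cell_mass N :
  zpart cell_mass N = Rint ua (- (IZR (Z.of_nat N + 1) * dx)) (IZR (Z.of_nat N + 1) * dx).
Proof.
  pose proof Rint_abs_u0_chasles as Hch.
  induction N as [|N IHN].
  - rewrite zpart_0; unfold cell_mass; rewrite Rplus_comm.
    change (-1 + 1)%Z with 0%Z; change (Z.of_nat 0 + 1)%Z with 1%Z.
    rewrite Hch. f_equal. change (IZR (-1)) with (- IZR 1). ring.
  - rewrite zpart_S, IHN. unfold cell_mass.
    replace (- Z.of_nat (S (S N)) + 1)%Z with (- (Z.of_nat N + 1))%Z by lia.
    replace (- Z.of_nat (S (S N)))%Z with (- (Z.of_nat N + 1 + 1))%Z by lia.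
    replace (Z.of_nat (S N)) with (Z.of_nat N + 1)%Z by lia.
    rewrite !opp_IZR, !Ropp_mult_distr_l.
    set (p := IZR (Z.of_nat N + 1) * dx); set (q := IZR (Z.of_nat N + 1 + 1) * dx).
    replace (- IZR (Z.of_nat N + 1) * dx) with (- p) by (unfold p; ring).
    replace (- IZR (Z.of_nat N + 1 + 1) * dx) with (- q) by (unfold q; ring).
    pose proof (Hch (- q) (- p) p); pose proof (Hch (- q) p q); lra.
Qed.

Lemma initial_cells_summable : Zsummable (fun i => / dx * Rint u0 (IZR i * dx) (IZR (i + 1) * dx)).
Proof.
  destruct Hu0 as [Hint [C HC]]. exists (/ dx * C). intros N.
  assert (Hi : 0 < / dx) by (apply Rinv_0_lt_compat; lra).
  eapply Rle_trans; [apply (zpart_le _ (fun i => / dx * cell_mass i)) |].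
  { intros i; rewrite Rabs_mult, Rabs_right by lra. apply Rmult_le_compat_l; [lra|].
    assert (Hle : IZR i * dx <= IZR (i + 1) * dx) by (rewrite plus_IZR; nra).
    destruct (Hint (IZR i * dx) (IZR (i + 1) * dx)) as [pr].
    unfold cell_mass, ua. rewrite (Rint_RiemannInt _ _ _ pr), (Rint_RiemannInt _ _ _ (RiemannInt_P16 pr)).
    apply RiemannInt_P17; auto. }
  rewrite zpart_scal, zpart_cell_mass. apply Rmult_le_compat_l; [lra|].
  set (X := IZR (Z.of_nat N + 1) * dx).
  assert (HX : 0 <= X) by (unfold X; apply Rmult_le_pos; [apply IZR_le; lia | lra]).
  destruct (INR_unbounded X) as [n Hn].
  eapply Rle_trans; [|apply (HC n)]. fold ua.
  pose proof Rint_abs_u0_chasles as Hch.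
  pose proof (Hch (- INR n) (- X) (INR n)); pose proof (Hch (- X) X (INR n)).
  pose proof (Rint_abs_u0_nonneg (- INR n) (- X) ltac:(lra)).
  pose proof (Rint_abs_u0_nonneg X (INR n) ltac:(lra)). lra.
Qed.

End InitialData.

(** * Slopes of the numerical flux *)

Lemma is_sup_abs2_le g M u v : is_sup_abs2 g M -> Rabs (g u v) <= M.
Proof. intros [H _]; apply H; exists u, v; reflexivity. Qed.

Lemma is_sup_abs_le g M u : is_sup_abs g M -> Rabs (g u) <= M.
Proof. intros [H _]; apply H; exists u; reflexivity. Qed.

Lemma slope_opp g u u' : slope (fun s => - g s) u u' = - slope g u u'.
Proof. unfold slope; destruct (Req_EM_T u' u); [ring | field; lra]. Qed.

Section Flux.
Variables (fh d1 d2 : R -> R -> R) (a : R -> R) (M1 M2 Ma : R).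
Hypothesis Hfh_C1 : C1_with_partials fh d1 d2.
Hypothesis Hfh_mon1 : forall u u' v, u <= u' -> fh u v <= fh u' v.
Hypothesis Hfh_mon2 : forall u v v', v <= v' -> fh u v' <= fh u v.
Hypothesis HM1 : is_sup_abs2 d1 M1.
Hypothesis HM2 : is_sup_abs2 d2 M2.
Hypothesis Ha : Lipschitz a.
Hypothesis Ha_nn : forall s, 0 <= a s.
Hypothesis HMa : is_sup_abs a Ma.

Lemma fh_slope1_bounds u u' v : 0 <= slope (fun s => fh s v) u u' <= M1.
Proof.
  apply slope_bounds, (increment_bounds_of_derivative _ (fun s => d1 s v)).
  - intro; apply (proj1 Hfh_C1).
  - intro; apply is_sup_abs2_le, HM1.
  - intros x y; apply Hfh_mon1.
Qed.

Lemma fh_slope2_bounds u v v' : - M2 <= slope (fh u) v v' <= 0.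
Proof.
  enough (0 <= slope (fun s => - fh u s) v v' <= M2) by (rewrite slope_opp in H; lra).
  apply slope_bounds, (increment_bounds_of_derivative _ (fun s => - d2 u s)).
  - intro; apply derivable_pt_lim_opp, (proj1 (proj2 Hfh_C1)).
  - intro; rewrite Rabs_Ropp; apply is_sup_abs2_le, HM2.
  - intros x y Hxy; pose proof (Hfh_mon2 u x y Hxy); lra.
Qed.

Lemma Aint_slope_bounds u u' : 0 <= slope (Aint a) u u' <= Ma.
Proof.
  apply slope_bounds. intros x y Hxy.
  pose proof (Lipschitz_Riemann_integrable a Ha) as Hint.
  assert (E : Aint a y - Aint a x = Rint a x y)
    by (unfold Aint; rewrite <- (Rint_chasles a 0 x y); auto; ring).
  rewrite E. split.
  - rewrite <- (Rmult_0_l (y - x)). apply Rint_ge_const; auto.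
  - apply Rint_le_const; auto. intro t; pose proof (is_sup_abs_le a Ma t HMa).
    pose proof (Rle_abs (a t)); lra.
Qed.

Hypothesis Hfh_Lip : Lipschitz2 fh.
Hypothesis Hfh00 : fh 0 0 = 0.

Lemma numflux_growth dx : 0 < dx -> exists K, 0 <= K /\
  forall V i, Rabs (numflux fh a dx V i) <= K * (Rabs (V i) + Rabs (V (i + 1)%Z)).
Proof.
  intros Hdx. destruct Hfh_Lip as [L HL].
  pose proof (Aint_slope_bounds 0 0) as HMa0.
  exists (Rabs L + Ma / dx). split.
  { assert (0 <= Ma / dx) by (apply Rmult_le_pos; [lra | left; apply Rinv_0_lt_compat; lra]).
    pose proof (Rabs_pos L); lra. }
  intros V i. set (x := V i); set (y := V (i + 1)%Z). unfold numflux; fold x y.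
  assert (Hf : Rabs (fh x y) <= Rabs L * (Rabs x + Rabs y)).
  { specialize (HL x y 0 0). rewrite Hfh00, !Rminus_0_r in HL.
    eapply Rle_trans; [apply HL|]. apply Rmult_le_compat_r; [|apply Rle_abs].
    pose proof (Rabs_pos x); pose proof (Rabs_pos y); lra. }
  assert (HA : Rabs (Aint a y - Aint a x) <= Ma * (Rabs x + Rabs y)).
  { rewrite slope_spec, Rabs_mult. pose proof (Aint_slope_bounds x y).
    rewrite Rabs_right by lra.
    apply Rmult_le_compat; try lra; [apply Rabs_pos|].
    unfold Rminus; eapply Rle_trans; [apply Rabs_triang|]; rewrite Rabs_Ropp; lra. }
  assert (HAdx : Rabs ((Aint a y - Aint a x) / dx) <= Ma * (Rabs x + Rabs y) / dx).
  { unfold Rdiv; rewrite Rabs_mult, (Rabs_right (/ dx)) by (left; apply Rinv_0_lt_compat; lra).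
    apply Rmult_le_compat_r; auto. left; apply Rinv_0_lt_compat; lra. }
  eapply Rle_trans; [apply Rabs_triang|]. rewrite Rabs_Ropp.
  replace ((Rabs L + Ma / dx) * (Rabs x + Rabs y))
    with (Rabs L * (Rabs x + Rabs y) + Ma * (Rabs x + Rabs y) / dx) by (field; lra).
  lra.
Qed.

End Flux.

(** * The discrete fractional operator *)

Section DiscreteOperator.
Variables lam c dx : R.
Hypothesis Hlam : 0 < lam < 1.
Hypothesis Hc : 0 < c.

Local Notation G := (Gw lam c dx).
Local Notation g0 := (Gker lam c dx 0).

Definition Gapply (X : Z -> R) (l : Z) : R := Zsum (fun j => G l j * X j).

Section BoundedArgument.
Variables (X : Z -> R) (M : R).
Hypothesis HX : forall j, Rabs (X j) <= M.

Lemma Gapply_row_summable l : Zsummable (fun j => G l j * X j).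
Proof. apply (Zsummable_mul_bounded _ _ M); auto. exists (Gmass lam c dx); apply Gw_row_bounded; auto. Qed.

Lemma Gapply_translate l z : Gapply (fun j => X (j + z)%Z) l = Gapply X (l + z).
Proof.
  unfold Gapply. rewrite <- (Zsum_shift _ z (Gapply_row_summable (l + z))).
  apply Zsum_ext; intros k. rewrite !Gw_translation. f_equal; f_equal; lia.
Qed.

Lemma Gapply_split i : Gapply X i = g0 * X i + Zsum (fun j => Goff lam c dx i j * X j).
Proof.
  assert (Hoff : Zsummable (fun j => Goff lam c dx i j * X j))
    by (apply (Zsummable_mul_bounded _ _ M); auto; apply Goff_row_summable; auto).
  unfold Gapply.
  rewrite (Zsum_ext _ (fun j => Goff lam c dx i j * X j + (if Z.eq_dec j i then g0 * X i else 0))).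
  - rewrite Zsum_plus, Zsum_indicator; auto; [ring | apply Zsummable_indicator].
  - intros j; rewrite Gw_split; auto. destruct (Z.eq_dec j i) as [->|]; ring.
Qed.

Lemma Goff_apply_abs_le i : Rabs (Zsum (fun j => Goff lam c dx i j * X j)) <= M * (- g0).
Proof.
  assert (Hs : Zsummable (Goff lam c dx i)) by (apply Goff_row_summable; auto).
  assert (Hoff : Zsummable (fun j => Goff lam c dx i j * X j))
    by (apply (Zsummable_mul_bounded _ _ M); auto).
  eapply Rle_trans; [apply Zsum_abs, Hoff|].
  eapply Rle_trans; [apply (Zsum_le _ (fun j => M * Goff lam c dx i j)) |].
  - apply Zsummable_abs, Hoff.
  - apply Zsummable_scal, Hs.
  - intros j; assert (0 <= Goff lam c dx i j) by (apply Goff_nonneg; auto).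
    rewrite Rabs_mult, Rabs_right, Rmult_comm by lra.
    apply Rmult_le_compat_r; auto.
  - rewrite Zsum_scal by exact Hs. apply Rmult_le_compat_l; [|apply Goff_row_sum_le; auto].
    pose proof (HX 0%Z); pose proof (Rabs_pos (X 0%Z)); lra.
Qed.

Lemma Gapply_vanishes : vanishes_at_neg_inf X -> vanishes_at_neg_inf (Gapply X).
Proof.
  intros HT. eapply (Zsum_mul_shift_vanishes (Gker lam c dx) X M) in HT;
    [| apply Gker_summable; auto | exact HX].
  intros e He; destruct (HT e He) as [K HK]; exists K; intros m Hm.
  unfold Gapply. rewrite <- (Zsum_shift _ m (Gapply_row_summable m)).
  erewrite Zsum_ext; [apply (HK m Hm)|].
  intros d; rewrite Gw_translation; do 3 f_equal; lia.
Qed.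

End BoundedArgument.

Lemma Gapply_minus X Y M : (forall j, Rabs (X j) <= M) -> (forall j, Rabs (Y j) <= M) ->
  forall l, Gapply (fun j => X j - Y j) l = Gapply X l - Gapply Y l.
Proof.
  intros HX HY l. unfold Gapply. rewrite <- Zsum_minus by (eapply Gapply_row_summable; eauto).
  apply Zsum_ext; intros; ring.
Qed.

(** Columns of [G] have bounded absolute sums, so [G] maps l1 to l1. *)
Lemma Gapply_summable X : Zsummable X -> Zsummable (Gapply X).
Proof.
  intros HXs. pose proof HXs as [BX HBX].
  destruct (Zsummable_bounded X HXs) as [M HM].
  assert (Hm : 0 < Gmass lam c dx) by (apply Gmass_pos; auto).
  exists (Gmass lam c dx * BX). intros N.
  assert (Habs : forall l, Zsummable (fun j => Rabs (G l j * X j)))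
    by (intros; apply Zsummable_abs; eapply Gapply_row_summable; eauto).
  eapply Rle_trans.
  { apply zpart_le with (g := fun l => Zsum (fun j => Rabs (G l j * X j))).
    intros; apply Zsum_abs; eapply Gapply_row_summable; eauto. }
  destruct (zpart_Zsum_swap (fun l j => Rabs (G l j * X j)) N Habs) as [_ ->].
  eapply Rle_trans; [apply (Zsum_le _ (fun j => Gmass lam c dx * Rabs (X j)))|].
  - apply zpart_Zsum_swap, Habs.
  - apply Zsummable_scal, Zsummable_abs, HXs.
  - intros j. rewrite (zpart_ext _ (fun l => Rabs (X j) * Rabs (G l j))) by (intros; rewrite Rabs_mult; ring).
    rewrite zpart_scal, Rmult_comm. apply Rmult_le_compat_r; [apply Rabs_pos|].
    apply Gw_col_bounded; auto.
  - rewrite Zsum_scal by (apply Zsummable_abs, HXs). apply Rmult_le_compat_l; [lra|].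
    apply Zsum_abs_le, HBX.
Qed.

End DiscreteOperator.

(** * One step of the scheme *)

Lemma Rabs_lincomb4_le p q r s x y z w : 0 <= p -> 0 <= q -> 0 <= r -> 0 <= s ->
  Rabs (p * x + q * y + r * z + s * w) <= p * Rabs x + q * Rabs y + r * Rabs z + s * Rabs w.
Proof.
  intros. pose proof (Rabs_triang (p * x + q * y + r * z) (s * w)).
  pose proof (Rabs_triang (p * x + q * y) (r * z)). pose proof (Rabs_triang (p * x) (q * y)).
  rewrite !Rabs_mult, !(Rabs_pos_eq p), !(Rabs_pos_eq q), !(Rabs_pos_eq r), !(Rabs_pos_eq s) in * by auto.
  lra.
Qed.

Section Scheme.
Variables (fh d1 d2 : R -> R -> R) (a : R -> R) (b lam c dx dt M1 M2 Ma : R).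
Hypothesis Hfh_C1 : C1_with_partials fh d1 d2.
Hypothesis Hfh_mon1 : forall u u' v, u <= u' -> fh u v <= fh u' v.
Hypothesis Hfh_mon2 : forall u v v', v <= v' -> fh u v' <= fh u v.
Hypothesis HM1 : is_sup_abs2 d1 M1.
Hypothesis HM2 : is_sup_abs2 d2 M2.
Hypothesis Ha : Lipschitz a.
Hypothesis Ha_nn : forall s, 0 <= a s.
Hypothesis HMa : is_sup_abs a Ma.
Hypothesis Hfh_Lip : Lipschitz2 fh.
Hypothesis Hfh00 : fh 0 0 = 0.
Hypothesis Hb : 0 <= b.
Hypothesis Hlam : 0 < lam < 1.
Hypothesis Hc : 0 < c.
Hypothesis Hdx : 0 < dx.
Hypothesis Hdt : 0 < dt.

Local Notation F := (numflux fh a dx).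
Local Notation Gap := (Gapply lam c dx).
Local Notation g0 := (Gker lam c dx 0).

(** [W n = Wflux (U n)] and [U (S n) = step (U n)] hold by conversion. *)
Definition Wflux (V : Z -> R) (i : Z) : R := F V i - b * Zsum_upto (Gap V) i.

Definition step (V : Z -> R) (i : Z) : R :=
  V i - dt * ((F V i - F V (i - 1)%Z) / dx) + dt * b * Ldisc lam c dx V i.

Definition coef_up (V : Z -> R) (i : Z) : R :=
  - (dt / dx) * slope (fh (V i)) (V (i + 1)%Z) (step V (i + 1)%Z)
  + dt / (dx * dx) * slope (Aint a) (V (i + 1)%Z) (step V (i + 1)%Z).

Definition coef_down (V : Z -> R) (i : Z) : R :=
  dt / dx * slope (fun s => fh s (step V (i + 1)%Z)) (V i) (step V i)
  + dt / (dx * dx) * slope (Aint a) (V i) (step V i).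

Section Step.
Variable V : Z -> R.
Hypothesis HV : Zsummable V.

Lemma numflux_summable : Zsummable (F V).
Proof.
  destruct (numflux_growth fh a Ma Ha Ha_nn HMa Hfh_Lip Hfh00 dx Hdx) as [K [HK HF]].
  apply (Zsummable_dom2 V (fun k => V (k + 1)%Z) _ K K); auto; [apply Zsummable_shift; auto|].
  intros; rewrite <- Rmult_plus_distr_l; auto.
Qed.

Lemma Wflux_bounded : exists M, forall i, Rabs (Wflux V i) <= M.
Proof.
  destruct (Zsummable_bounded _ numflux_summable) as [MF HMF].
  destruct (Gapply_summable lam c dx Hlam Hc V HV) as [BP HBP].
  exists (MF + b * BP). intros i. unfold Wflux.
  eapply Rle_trans; [apply Rabs_triang|]. rewrite Rabs_Ropp, Rabs_mult, (Rabs_right b) by lra.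
  apply Rplus_le_compat; auto. apply Rmult_le_compat_l; auto. apply Zsum_upto_abs_le, HBP.
Qed.

Lemma Wflux_vanishes : vanishes_at_neg_inf (Wflux V).
Proof.
  intros e He. set (e1 := e / (2 * (b + 1))).
  assert (He1 : 0 < e1) by (apply Rdiv_lt_0_compat; lra).
  assert (E1 : e1 * (2 * (b + 1)) = e) by (unfold e1; field; lra).
  destruct (Zsummable_vanishes _ numflux_summable e1 He1) as [K1 H1].
  destruct (Zsum_upto_vanishes _ (Gapply_summable lam c dx Hlam Hc V HV) e1 He1) as [K2 H2].
  exists (Z.min K1 K2). intros i Hi. specialize (H1 i ltac:(lia)). specialize (H2 i ltac:(lia)).
  unfold Wflux. eapply Rle_lt_trans; [apply Rabs_triang|].
  rewrite Rabs_Ropp, Rabs_mult, (Rabs_right b) by lra.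
  assert (b * Rabs (Zsum_upto (Gap V) i) <= b * e1) by (apply Rmult_le_compat_l; lra). nra.
Qed.

Lemma step_conservative j : step V j = V j - dt / dx * (Wflux V j - Wflux V (j - 1)%Z).
Proof.
  unfold step, Wflux, Ldisc.
  rewrite (Zsum_upto_rec _ j (Gapply_summable lam c dx Hlam Hc V HV)).
  unfold Gapply. field. lra.
Qed.

Lemma step_summable : Zsummable (step V).
Proof.
  pose proof numflux_summable as HF.
  pose proof (Gapply_summable lam c dx Hlam Hc V HV) as HG.
  assert (HFm : Zsummable (fun k => F V (k - 1)%Z))
    by (apply (Zsummable_ext (fun k => F V (k + -1)%Z)); [reflexivity | apply Zsummable_shift; auto]).
  eapply Zsummable_ext; [|apply (Zsummable_plus _ _ (Zsummable_minus _ _ HV (Zsummable_scal (dt / dx) _ HF))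
     (Zsummable_plus _ _ (Zsummable_scal (dt / dx) _ HFm) (Zsummable_scal (dt * b / dx) _ HG)))].
  intros; unfold step, Ldisc, Gapply; field; lra.
Qed.

Local Notation W := (Wflux V).

Lemma Gapply_step l : Gap (step V) l = Gap V l - dt / dx * (Gap W l - Gap W (l - 1)%Z).
Proof.
  destruct Wflux_bounded as [MW HMW]. destruct (Zsummable_bounded V HV) as [MV HMV].
  assert (HMWm : forall j, Rabs (W (j + -1)%Z) <= MW) by auto.
  replace (l - 1)%Z with (l + -1)%Z by lia.
  rewrite <- (Gapply_translate lam c dx Hlam Hc W MW HMW).
  unfold Gapply.
  rewrite (Zsum_ext _ (fun j => Gw lam c dx l j * V j
             - dt / dx * (Gw lam c dx l j * W j - Gw lam c dx l j * W (j + -1)%Z)))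
    by (intros j; rewrite step_conservative; ring_simplify; do 3 f_equal; lia).
  rewrite Zsum_minus, Zsum_scal, Zsum_minus; auto;
    try apply Zsummable_scal; try apply Zsummable_minus; eapply Gapply_row_summable; eauto.
Qed.

Lemma upto_part_Gapply_step i M :
  upto_part (Gap (step V)) i M
  = upto_part (Gap V) i M - dt / dx * (Gap W i - Gap W (i - Z.of_nat (S M))%Z).
Proof.
  unfold upto_part; induction M as [|M IHM].
  - simpl. rewrite Z.sub_0_r, Gapply_step. replace (i - Z.of_nat 1)%Z with (i - 1)%Z by lia. ring.
  - rewrite !tech5, IHM, (Gapply_step (i - Z.of_nat (S M))).
    replace (i - Z.of_nat (S M) - 1)%Z with (i - Z.of_nat (S (S M)))%Z by lia. ring.
Qed.

(** Telescoping in [upto_part]; the boundary term at [-oo] vanishes because [W] does. *)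
Lemma Zsum_upto_Gapply_step i :
  Zsum_upto (Gap (step V)) i = Zsum_upto (Gap V) i - dt / dx * Gap W i.
Proof.
  destruct Wflux_bounded as [MW HMW].
  apply Zsum_upto_unique.
  assert (Htail : Un_cv (fun M => Gap W (i - Z.of_nat (S M))%Z) 0).
  { intros e He.
    destruct (Gapply_vanishes lam c dx Hlam Hc W MW HMW Wflux_vanishes e He) as [K HK].
    exists (Z.to_nat (i - K)); intros n Hn; unfold Rdist; rewrite Rminus_0_r; apply HK; lia. }
  pose proof (CV_minus _ _ _ _ (Zsum_upto_cv _ i (Gapply_summable lam c dx Hlam Hc V HV))
    (CV_mult _ _ _ _ (Un_cv_const (dt / dx)) (CV_minus _ _ _ _ (Un_cv_const (Gap W i)) Htail))) as H.
  rewrite Rminus_0_r in H.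
  intros e He; destruct (H e He) as [N HN]; exists N; intros n Hn.
  rewrite upto_part_Gapply_step. apply HN; auto.
Qed.

(** Harten's incremental form: each increment of the flux is a slope times an increment of [U]. *)
Lemma numflux_step i :
  F (step V) i = F V i + coef_up V i * (W (i + 1)%Z - W i) - coef_down V i * (W i - W (i - 1)%Z).
Proof.
  set (v0 := V i); set (v1 := V (i + 1)%Z); set (s0 := step V i); set (s1 := step V (i + 1)%Z).
  pose proof (slope_spec (fun s => fh s s1) v0 s0) as E1; simpl in E1.
  pose proof (slope_spec (fh v0) v1 s1) as E2.
  pose proof (slope_spec (Aint a) v1 s1) as E3.
  pose proof (slope_spec (Aint a) v0 s0) as E4.
  assert (D0 : s0 - v0 = - (dt / dx) * (W i - W (i - 1)%Z))
    by (unfold s0, v0; rewrite step_conservative; ring).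
  assert (D1 : s1 - v1 = - (dt / dx) * (W (i + 1)%Z - W i)).
  { unfold s1, v1; rewrite step_conservative. replace (i + 1 - 1)%Z with i by lia. ring. }
  rewrite D0 in E1, E4. rewrite D1 in E2, E3.
  unfold numflux, coef_up, coef_down; fold v0 v1 s0 s1.
  replace (fh s0 s1) with (fh v0 v1 + (fh s0 s1 - fh v0 s1) + (fh v0 s1 - fh v0 v1)) by ring.
  replace (Aint a s1 - Aint a s0)
    with (Aint a v1 - Aint a v0 + (Aint a s1 - Aint a v1) - (Aint a s0 - Aint a v0)) by ring.
  rewrite E1, E2, E3, E4. field. lra.
Qed.

Lemma Wflux_step i :
  Wflux (step V) i = W i + coef_up V i * (W (i + 1)%Z - W i)
                     - coef_down V i * (W i - W (i - 1)%Z) + b * dt / dx * Gap W i.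
Proof. unfold Wflux at 1. rewrite numflux_step, Zsum_upto_Gapply_step. unfold Wflux. field. lra. Qed.

End Step.

Lemma coef_up_bounds V i : 0 <= coef_up V i <= dt / dx * M2 + dt / (dx * dx) * Ma.
Proof.
  unfold coef_up.
  pose proof (fh_slope2_bounds fh d1 d2 M2 Hfh_C1 Hfh_mon2 HM2 (V i) (V (i + 1)%Z) (step V (i + 1)%Z)).
  pose proof (Aint_slope_bounds a Ma Ha Ha_nn HMa (V (i + 1)%Z) (step V (i + 1)%Z)).
  assert (0 < dt / dx) by (apply Rdiv_lt_0_compat; lra).
  assert (0 < dt / (dx * dx)) by (apply Rdiv_lt_0_compat; nra).
  split; nra.
Qed.

Lemma coef_down_bounds V i : 0 <= coef_down V i <= dt / dx * M1 + dt / (dx * dx) * Ma.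
Proof.
  unfold coef_down.
  pose proof (fh_slope1_bounds fh d1 d2 M1 Hfh_C1 Hfh_mon1 HM1 (V i) (step V i) (step V (i + 1)%Z)).
  pose proof (Aint_slope_bounds a Ma Ha Ha_nn HMa (V i) (step V i)).
  assert (0 < dt / dx) by (apply Rdiv_lt_0_compat; lra).
  assert (0 < dt / (dx * dx)) by (apply Rdiv_lt_0_compat; nra).
  split; nra.
Qed.

Hypothesis HCFL : dt / dx * (M1 + M2) + 2 * dt / (dx * dx) * Ma
                  + b * dlam lam c * (dt / Rpower dx lam) <= 1.

(** The CFL condition, read through [G^i_i = - d_lam dx^(1-lam)]. *)
Lemma CFL_coefs V i j : coef_up V i + coef_down V j <= 1 + b * dt / dx * g0.
Proof.
  pose proof (coef_up_bounds V i); pose proof (coef_down_bounds V j).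
  assert (Hpow : Rpower dx (1 - lam) = dx / Rpower dx lam)
    by (unfold Rminus, Rdiv; rewrite Rpower_plus, Rpower_1, Rpower_Ropp; auto).
  assert (0 < Rpower dx lam) by apply exp_pos.
  replace (b * dt / dx * g0) with (- (b * dlam lam c * (dt / Rpower dx lam)))
    by (rewrite Gker_0, Hpow by auto; field; lra).
  replace (2 * dt / (dx * dx)) with (2 * (dt / (dx * dx))) in HCFL by (field; lra).
  lra.
Qed.


Lemma beta_nonneg : 0 <= b * dt / dx.
Proof. apply Rmult_le_pos; [nra | left; apply Rinv_0_lt_compat; lra]. Qed.

Lemma Wflux_step_sup V M : Zsummable V -> (forall i, Rabs (Wflux V i) <= M) ->
  forall i, Rabs (Wflux (step V) i) <= M.
Proof.
  intros HV HM i.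
  set (beta := b * dt / dx); set (Cu := coef_up V i); set (Cd := coef_down V i).
  set (S := Zsum (fun j => Goff lam c dx i j * Wflux V j)).
  assert (HS : Rabs S <= M * (- g0)) by (apply (Goff_apply_abs_le lam c dx Hlam Hc _ M HM)).
  assert (Hcoef : 0 <= 1 - Cu - Cd + beta * g0) by (pose proof (CFL_coefs V i i); unfold beta, Cu, Cd; lra).
  assert (HCu : 0 <= Cu) by apply coef_up_bounds.
  assert (HCd : 0 <= Cd) by apply coef_down_bounds.
  assert (Hbeta : 0 <= beta) by apply beta_nonneg.
  rewrite Wflux_step, (Gapply_split lam c dx Hlam Hc _ M HM) by auto. fold beta Cu Cd S.
  replace (Wflux V i + Cu * (Wflux V (i + 1)%Z - Wflux V i) - Cd * (Wflux V i - Wflux V (i - 1)%Z)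
           + beta * (g0 * Wflux V i + S))
    with ((1 - Cu - Cd + beta * g0) * Wflux V i + Cu * Wflux V (i + 1)%Z
          + Cd * Wflux V (i - 1)%Z + beta * S) by ring.
  eapply Rle_trans; [apply Rabs_lincomb4_le; auto|].
  pose proof (Rmult_le_compat_l _ _ _ Hcoef (HM i)).
  pose proof (Rmult_le_compat_l _ _ _ HCu (HM (i + 1)%Z)).
  pose proof (Rmult_le_compat_l _ _ _ HCd (HM (i - 1)%Z)).
  pose proof (Rmult_le_compat_l _ _ _ Hbeta HS).
  assert (E : (1 - Cu - Cd + beta * g0) * M + Cu * M + Cd * M + beta * (M * - g0) = M) by ring.
  lra.
Qed.

Definition fwd_diff (X : Z -> R) (j : Z) : R := X (j + 1)%Z - X j.

Definition diag_coef (V : Z -> R) (j : Z) : R :=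
  1 - coef_down V (j + 1)%Z - coef_up V j + b * dt / dx * g0.

(** The matrix by which [step] acts on the increments of [Wflux]; by the CFL condition its
    entries are nonnegative and its columns sum to at most 1. *)
Definition increment_matrix (V : Z -> R) (i j : Z) : R :=
  band 0 (diag_coef V) i j + band 1 (coef_up V) i j
  + band (-1) (fun j => coef_down V (j + 1)%Z) i j + b * dt / dx * Goff lam c dx i j.

Lemma diag_coef_nonneg V j : 0 <= diag_coef V j.
Proof. pose proof (CFL_coefs V j (j + 1)); unfold diag_coef; lra. Qed.

Lemma increment_matrix_col_le V j N : zpart (fun i => increment_matrix V i j) N <= 1.
Proof.
  unfold increment_matrix. rewrite !zpart_plus, zpart_scal.
  pose proof (zpart_band_le 0 (diag_coef V) j N (diag_coef_nonneg V j)).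
  pose proof (zpart_band_le 1 (coef_up V) j N (proj1 (coef_up_bounds V j))).
  pose proof (zpart_band_le (-1) (fun j => coef_down V (j + 1)%Z) j N (proj1 (coef_down_bounds V _))).
  assert (Hg : zpart (fun i => Goff lam c dx i j) N <= - g0).
  { eapply Rle_trans; [apply zpart_le_Zsum | apply Goff_col_sum_le; auto].
    - apply Goff_col_summable; auto.
    - intros; apply Goff_nonneg; auto. }
  pose proof (Rmult_le_compat_l _ _ _ beta_nonneg Hg). unfold diag_coef in *. simpl in *. lra.
Qed.

Section MatrixApply.
Variables (V y : Z -> R) (M : R).
Hypothesis Hy : forall j, Rabs (y j) <= M.

Lemma increment_matrix_split i j : increment_matrix V i j * y j =
  band 0 (diag_coef V) i j * y j + band 1 (coef_up V) i j * y j
  + band (-1) (fun j => coef_down V (j + 1)%Z) i j * y j + b * dt / dx * (Goff lam c dx i j * y j).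
Proof. unfold increment_matrix; ring. Qed.

Lemma increment_matrix_row_summable i : Zsummable (fun j => increment_matrix V i j * y j).
Proof.
  apply (Zsummable_ext _ _ (fun j => eq_sym (increment_matrix_split i j))).
  repeat apply Zsummable_plus; try apply Zsummable_scal; try apply Zsummable_band_mul.
  apply (Zsummable_mul_bounded _ _ M); auto; apply Goff_row_summable; auto.
Qed.

Lemma increment_matrix_apply i : Zsum (fun j => increment_matrix V i j * y j)
  = diag_coef V i * y i + coef_up V (i + 1)%Z * y (i + 1)%Z + coef_down V i * y (i - 1)%Z
    + b * dt / dx * Zsum (fun j => Goff lam c dx i j * y j).
Proof.
  assert (Hoff : Zsummable (fun j => Goff lam c dx i j * y j))
    by (apply (Zsummable_mul_bounded _ _ M); auto; apply Goff_row_summable; auto).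
  rewrite (Zsum_ext _ _ (increment_matrix_split i)).
  rewrite !Zsum_plus, Zsum_scal, !Zsum_band_mul;
    repeat apply Zsummable_plus; try apply Zsummable_scal; try apply Zsummable_band_mul; auto.
  rewrite Z.add_0_r. replace (i + -1 + 1)%Z with i by lia. replace (i + -1)%Z with (i - 1)%Z by lia.
  reflexivity.
Qed.

End MatrixApply.

Lemma Wflux_step_increment V MW : Zsummable V -> (forall j, Rabs (Wflux V j) <= MW) ->
  forall i, fwd_diff (Wflux (step V)) i
  = diag_coef V i * fwd_diff (Wflux V) i + coef_up V (i + 1)%Z * fwd_diff (Wflux V) (i + 1)%Z
    + coef_down V i * fwd_diff (Wflux V) (i - 1)%Z
    + b * dt / dx * Zsum (fun j => Goff lam c dx i j * fwd_diff (Wflux V) j).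
Proof.
  intros HV HMW i. set (Y := fwd_diff (Wflux V)).
  assert (HY : forall j, Rabs (Y j) <= MW + MW).
  { intros j; unfold Y, fwd_diff. eapply Rle_trans; [apply Rabs_triang|].
    rewrite Rabs_Ropp; apply Rplus_le_compat; auto. }
  assert (HGY : Gap (Wflux V) (i + 1)%Z - Gap (Wflux V) i
                = g0 * Y i + Zsum (fun j => Goff lam c dx i j * Y j)).
  { rewrite <- (Gapply_translate lam c dx Hlam Hc _ MW HMW),
            <- (Gapply_minus lam c dx Hlam Hc _ _ MW); auto.
    apply (Gapply_split lam c dx Hlam Hc Y (MW + MW) HY). }
  unfold fwd_diff at 1. rewrite !Wflux_step by auto.
  unfold diag_coef, Y, fwd_diff in *.
  replace (i + 1 - 1)%Z with i by lia. replace (i - 1 + 1)%Z with i by lia.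
  replace (b * dt / dx * Gap (Wflux V) (i + 1)%Z) with
    (b * dt / dx * Gap (Wflux V) i + b * dt / dx * (Gap (Wflux V) (i + 1)%Z - Gap (Wflux V) i)) by ring.
  rewrite HGY. ring.
Qed.

Lemma Wflux_step_increment_abs_le V MW S : Zsummable V -> (forall j, Rabs (Wflux V j) <= MW) ->
  Zbounded_by (fwd_diff (Wflux V)) S -> forall i,
  Rabs (fwd_diff (Wflux (step V)) i)
  <= Zsum (fun j => increment_matrix V i j * Rabs (fwd_diff (Wflux V) j)).
Proof.
  intros HV HMW HS i. set (Y := fwd_diff (Wflux V)).
  assert (HYabs : forall j, Rabs (Rabs (Y j)) <= S)
    by (intros; rewrite Rabs_Rabsolu; apply Zbounded_by_term, HS).
  rewrite (increment_matrix_apply V _ S HYabs), (Wflux_step_increment V MW HV HMW). fold Y.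
  eapply Rle_trans; [apply Rabs_lincomb4_le;
    [apply diag_coef_nonneg | apply coef_up_bounds | apply coef_down_bounds | apply beta_nonneg]|].
  apply Rplus_le_compat_l, Rmult_le_compat_l; [apply beta_nonneg|].
  assert (Hoff : Zsummable (fun j => Goff lam c dx i j * Y j)).
  { apply (Zsummable_mul_bounded _ _ S); [apply Goff_row_summable; auto|].
    intros; apply Zbounded_by_term, HS. }
  eapply Rle_trans; [apply Zsum_abs, Hoff|].
  right; apply Zsum_ext; intros j.
  rewrite Rabs_mult, (Rabs_pos_eq (Goff _ _ _ _ _)) by (apply Goff_nonneg; auto). reflexivity.
Qed.

Lemma Wflux_step_tv V S : Zsummable V -> Zbounded_by (fwd_diff (Wflux V)) S ->
  Zbounded_by (fwd_diff (Wflux (step V))) S.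
Proof.
  intros HV HS N. set (Y := fwd_diff (Wflux V)).
  destruct (Wflux_bounded V HV) as [MW HMW].
  assert (HYs : Zsummable Y) by (exists S; exact HS).
  assert (HYabs : forall j, Rabs (Rabs (Y j)) <= S)
    by (intros; rewrite Rabs_Rabsolu; apply Zbounded_by_term, HS).
  eapply Rle_trans; [apply zpart_le, (Wflux_step_increment_abs_le V MW S); auto|].
  eapply Rle_trans; [apply zpart_matrix_apply_le|].
  - apply increment_matrix_col_le.
  - intro; apply (increment_matrix_row_summable V _ S HYabs).
  - apply Zsummable_abs, HYs.
  - intros; apply Rabs_pos.
  - apply Zsum_abs_le, HS.
Qed.

Section Iteration.
Variable u0 : R -> R.
Hypothesis Hu0 : integrable_L1 u0.

Local Notation Un n := (U fh a b lam c dx dt u0 n).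

Lemma U_summable n : Zsummable (Un n).
Proof.
  induction n as [|n IHn]; [exact (initial_cells_summable u0 dx Hdx Hu0)|].
  exact (step_summable (Un n) IHn).
Qed.

Lemma W_sup_nonincreasing n M : (forall i, Rabs (W fh a b lam c dx dt u0 0 i) <= M) ->
  forall i, Rabs (W fh a b lam c dx dt u0 n i) <= M.
Proof.
  intros H0; induction n as [|n IHn]; [exact H0|].
  exact (Wflux_step_sup (Un n) M (U_summable n) IHn).
Qed.

Lemma W_tv_nonincreasing n S :
  Zbounded_by (fwd_diff (W fh a b lam c dx dt u0 0)) S ->
  Zbounded_by (fwd_diff (W fh a b lam c dx dt u0 n)) S.
Proof.
  intros H0; induction n as [|n IHn]; [exact H0|].
  exact (Wflux_step_tv (Un n) S (U_summable n) IHn).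
Qed.

End Iteration.
End Scheme.

Theorem mainTheorem7
  (f a : R -> R) (fh d1 d2 : R -> R -> R) (b lam c dx dt : R) (u0 : R -> R)
  (Ma M1 M2 : R)
  (Hf : Lipschitz f) (Hf0 : f 0 = 0)
  (Ha : Lipschitz a) (Ha_nn : forall s, 0 <= a s)
  (Ha_bd : exists K, forall s, Rabs (a s) <= K)
  (Hb : 0 <= b) (Hlam : 0 < lam < 1) (Hc : 0 < c)
  (Hfh_C1 : C1_with_partials fh d1 d2) (Hfh_Lip : Lipschitz2 fh)
  (Hfh_cons : forall u, fh u u = f u)
  (Hfh_mon1 : forall u u' v, u <= u' -> fh u v <= fh u' v)
  (Hfh_mon2 : forall u v v', v <= v' -> fh u v' <= fh u v)
  (Hdx : 0 < dx) (Hdt : 0 < dt)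
  (Hu0 : integrable_L1 u0 /\ bounded_variation u0)
  (HM1 : is_sup_abs2 d1 M1) (HM2 : is_sup_abs2 d2 M2) (HMa : is_sup_abs a Ma)
  (HCFL : dt / dx * (M1 + M2) + 2 * dt / (dx * dx) * Ma
          + b * dlam lam c * (dt / Rpower dx lam) <= 1) :
  forall n : nat,
    (forall M, (forall i, Rabs (W fh a b lam c dx dt u0 0 i) <= M) ->
       forall i, Rabs (W fh a b lam c dx dt u0 n i) <= M) /\
    (forall S, (forall N, zpart (fun i => Rabs (W fh a b lam c dx dt u0 0 (i + 1)%Z
                                              - W fh a b lam c dx dt u0 0 i)) N <= S) ->
       forall N, zpart (fun i => Rabs (W fh a b lam c dx dt u0 n (i + 1)%Z
                                      - W fh a b lam c dx dt u0 n i)) N <= S).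
Proof.
  assert (Hfh00 : fh 0 0 = 0) by (rewrite Hfh_cons; exact Hf0).
  intros n; split; intros B.
  - eapply W_sup_nonincreasing; eauto; exact (proj1 Hu0).
  - eapply W_tv_nonincreasing; eauto; exact (proj1 Hu0).
Qed.
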